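(* Let $\gamma:S^1\to\mathbb{R}_{>0}$, $\gamma(e^{i\theta})=\cos^6\theta+\sin^6\theta$, and write $\xi_\gamma(\theta)=\xi_\gamma(e^{i\theta})$; for a set $I\subset\mathbb{R}$ write $\xi_\gamma(I)=\{\xi_\gamma(\theta):\theta\in I\}$. (i) $\xi_\gamma(e^{i\theta})=(\cos\theta(\cos^6\theta+6\cos^4\theta\sin^2\theta-5\sin^6\theta),\ \sin\theta(-5\cos^6\theta+6\cos^4\theta\sin^2\theta+\sin^6\theta))$. (ii) $W_\gamma=\xi_\gamma\big([\rho_1,\rho_2]\cup[\rho_1+\pi/2,\rho_2+\pi/2]\cup[\rho_1+\pi,\rho_2+\pi]\cup[\rho_1+3\pi/2,\rho_2+3\pi/2]\big)$. (iii) Each of the following closed curves contained in $\xi_\gamma(S^1)$ is a closed piecewise-$C^\infty$ CAMC curve for $\gamma$, with anisotropic curvature $-1$ with respect to the outward-pointing normal: $(C_\gamma)_1=\xi_\gamma([\theta_2,\theta_3]\cup[\theta_4,\theta_5]\cup[\theta_6,\theta_7]\cup[\theta_8,\theta_1])$; $(C_\gamma)_2=\xi_\gamma([\theta_1,\theta_2]\cup[\theta_5,\theta_6])$; $(C_\gamma)_3=\xi_\gamma([\theta_8,\theta_1]\cup[\theta_3,\rho_2+\pi/2]\cup[\rho_1+\pi,\theta_6])$; $(C_\gamma)_4=\xi_\gamma([\theta_1,\rho_1]\cup[\rho_2,\theta_2]\cup[\theta_3,\rho_1+\pi/2]\cup[\rho_2+\pi/2,\theta_4]\cup[\theta_5,\rho_1+\pi]\cup[\rho_2+\pi,\theta_6]\cup[\theta_7,\rho_1+3\pi/2]\cup[\rho_2+3\pi/2,\theta_8+2\pi])$.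 (iv) The closed piecewise-$C^\infty$ curve $(C_\gamma)_5=\xi_\gamma([-\rho_1,\rho_1])$ is not CAMC: with respect to the outward-pointing normal its anisotropic curvature is $-1$ at each point of $\xi_\gamma([\theta_8,\theta_1])$ and $+1$ at each point of $\xi_\gamma([-\rho_1,\theta_8]\cup[\theta_1,\rho_1])$ (regular points).
   Context: $\mathbb{R}^2\cong\mathbb{C}$. Cahn–Hoffman map: $\xi_\gamma(\nu)=D\gamma|_\nu+\gamma(\nu)\nu$. Wulff shape $W_\gamma$: boundary of $\bigcap_{\nu\in S^1}\{X:\langle X,\nu\rangle\le\gamma(\nu)\}$. Constants: $\theta_1\in(0,\pi/2)$ with $\cos\theta_1=\frac{\sqrt5+1}{2\sqrt3}$; $\theta_2=\pi/2-\theta_1$, $\theta_3=\pi/2+\theta_1$, $\theta_4=\pi-\theta_1$, $\theta_5=\pi+\theta_1$, $\theta_6=3\pi/2-\theta_1$, $\theta_7=3\pi/2+\theta_1$, $\theta_8=-\theta_1$ (the parameters of the singular points of $\xi_\gamma$); $\rho_1,\rho_2\in(0,\pi/2)$ with $\cos\rho_1=\sqrt{(1+\sqrt5)/6}$, $\cos\rho_2=\sqrt{(5-\sqrt5)/6}$. A closed piecewise-$C^\infty$ curve here is the image of a piecewise-$C^\infty$ weak immersion of $S^1$ (a continuous map, decomposed into arcs on each of which it is smooth and immersive in the interior with unit normal extending continuously to the arc endpoints). For such a curve with unit normal $\nu$, the Cahn–Hoffman field is $\tilde\xi=\xi_\gamma\circ\nu$, and at regular points the anisotropic curvature is $\Lambda=-\operatorname{trace}(d\tilde\xi)$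 (relative to $dX$). The curve is CAMC if $\Lambda$ is constant at regular points and at each junction point $\zeta$ of two arcs $i,j$ one has $\tilde\xi_i(\zeta)-\tilde\xi_j(\zeta)\in T_\zeta(\text{junction})=\{0\}$, i.e. the Cahn–Hoffman fields agree. *)

From Stdlib Require Export Reals Lra List ClassicalEpsilon.
Export ListNotations.
Open Scope R_scope.

Definition pt := (R * R)%type.
Definition padd (u v : pt) : pt := (fst u + fst v, snd u + snd v).
Definition pscal (c : R) (u : pt) : pt := (c * fst u, c * snd u).
Definition dot (u v : pt) : R := fst u * fst v + snd u * snd v.
Definition pnorm (u : pt) : R := sqrt (dot u u).
Definition pdist (u v : pt) : R := pnorm (padd u (pscal (-1) v)).
Definition unit_vec (u : pt) : Prop := dot u u = 1.
Definition rot_ccw (u : pt) : pt := (- snd u, fst u).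
Definition rot_cw (u : pt) : pt := (snd u, - fst u).

(** * Derivatives (the derivative, whenever it exists; chosen by epsilon) *)
Definition deriv (f : R -> R) (t : R) : R :=
  epsilon (inhabits 0) (fun l => derivable_pt_lim f t l).
Definition dvec (f : R -> pt) (t : R) : pt :=
  (deriv (fun s => fst (f s)) t, deriv (fun s => snd (f s)) t).

(** * Cahn--Hoffman map of an anisotropy g : S^1 -> R_{>0}
    xi_g(nu) = Dg|_nu + g(nu) nu, where Dg|_nu is the (tangential) gradient
    of g on S^1 at nu: the derivative of g along the unit-speed great circle
    s |-> cos s nu + sin s J nu at s = 0, times the unit tangent J nu. *)
Definition grad_S1 (g : pt -> R) (nu : pt) : pt :=
  pscal (deriv (fun s => g (padd (pscal (cos s) nu) (pscal (sin s) (rot_ccw nu)))) 0)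
        (rot_ccw nu).
Definition CH (g : pt -> R) (nu : pt) : pt := padd (grad_S1 g nu) (pscal (g nu) nu).
Definition CHang (g : pt -> R) (theta : R) : pt := CH g (cos theta, sin theta).

Definition Wulff_body (g : pt -> R) (X : pt) : Prop :=
  forall nu : pt, unit_vec nu -> dot X nu <= g nu.
Definition boundary (S : pt -> Prop) (X : pt) : Prop :=
  forall eps, 0 < eps ->
    (exists Y, S Y /\ pdist X Y < eps) /\ (exists Y, ~ S Y /\ pdist X Y < eps).
Definition Wulff_shape (g : pt -> R) (X : pt) : Prop := boundary (Wulff_body g) X.

(** * Closed piecewise-C^infty curves, as cyclic lists of arcs.
    An arc (f, a, b) is the map f restricted to [a, b]; the closed curve is the
    concatenation of its arcs in list order (end of arc i = start of arc i+1,
    cyclically), i.e. a continuous map of S^1. *)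
Definition arc := ((R -> pt) * R * R)%type.
Definition afun (c : arc) : R -> pt := fst (fst c).
Definition alo (c : arc) : R := snd (fst c).
Definition ahi (c : arc) : R := snd c.

Definition smooth_on (f : R -> R) (a b : R) : Prop :=
  exists D : nat -> R -> R,
    (forall t, a < t < b -> D 0%nat t = f t) /\
    (forall n t, a < t < b -> derivable_pt_lim (D n) t (D (S n) t)).

Definition continuous_on_closed (f : R -> pt) (a b : R) : Prop :=
  forall t, a <= t <= b -> forall eps, 0 < eps -> exists delta, 0 < delta /\
    forall s, a <= s <= b -> Rabs (s - t) < delta -> pdist (f s) (f t) < eps.

Definition lim_right (h : R -> pt) (a : R) (L : pt) : Prop :=
  forall eps, 0 < eps -> exists delta, 0 < delta /\
    forall t, a < t < a + delta -> pdist (h t) L < eps.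
Definition lim_left (h : R -> pt) (b : R) (L : pt) : Prop :=
  forall eps, 0 < eps -> exists delta, 0 < delta /\
    forall t, b - delta < t < b -> pdist (h t) L < eps.

(* unit normal of an arc: the tangent rotated by -pi/2 (right-hand normal);
   for a positively oriented closed curve this is the outward-pointing normal *)
Definition normal (f : R -> pt) (t : R) : pt :=
  pscal (/ pnorm (dvec f t)) (rot_cw (dvec f t)).

Definition weak_immersion_arc (c : arc) : Prop :=
  let f := afun c in let a := alo c in let b := ahi c in
  a < b /\
  continuous_on_closed f a b /\
  smooth_on (fun s => fst (f s)) a b /\ smooth_on (fun s => snd (f s)) a b /\
  (forall t, a < t < b -> dvec f t <> (0, 0)) /\
  (exists L, lim_right (normal f) a L) /\
  (exists L, lim_left (normal f) b L).

Definition dummy_arc : arc := (fun _ => (0, 0), 0, 1).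
Definition next_index (C : list arc) (i : nat) : nat := ((S i) mod (length C))%nat.

Definition closed_pw_curve (C : list arc) : Prop :=
  C <> [] /\ Forall weak_immersion_arc C /\
  forall i, (i < length C)%nat ->
    afun (nth i C dummy_arc) (ahi (nth i C dummy_arc)) =
    afun (nth (next_index C i) C dummy_arc) (alo (nth (next_index C i) C dummy_arc)).

Definition curve_image (C : list arc) (X : pt) : Prop :=
  exists c, In c C /\ exists t, alo c <= t <= ahi c /\ X = afun c t.

(** Signed (enclosed) area  (1/2) \oint (x dy - y dx); the curve is positively
    oriented when it is > 0, and then [normal] is the outward-pointing normal. *)
Definition arc_area (c : arc) (A : R) : Prop :=
  let f := afun c in
  exists pr : Riemann_integrable
      (fun t => (fst (f t) * snd (dvec f t) - snd (f t) * fst (dvec f t)) / 2)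
      (alo c) (ahi c),
    RiemannInt pr = A.
Definition positively_oriented (C : list arc) : Prop :=
  exists As : list R, Forall2 arc_area C As /\ 0 < fold_right Rplus 0 As.

(** Cahn--Hoffman field xi~ = xi_g o nu and anisotropic curvature
    Lambda = - trace(d xi~) (relative to dX) at regular (interior) points. *)
Definition CH_field (g : pt -> R) (f : R -> pt) (t : R) : pt := CH g (normal f t).
Definition aniso_curv (g : pt -> R) (f : R -> pt) (t : R) : R :=
  - dot (dvec (CH_field g f) t) (dvec f t) / dot (dvec f t) (dvec f t).

Definition CAMC_with (g : pt -> R) (C : list arc) (Lam : R) : Prop :=
  (forall c, In c C -> forall t, alo c < t < ahi c -> aniso_curv g (afun c) t = Lam) /\
  (forall i, (i < length C)%nat -> forall n1 n2,
     lim_left (normal (afun (nth i C dummy_arc))) (ahi (nth i C dummy_arc)) n1 ->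
     lim_right (normal (afun (nth (next_index C i) C dummy_arc)))
               (alo (nth (next_index C i) C dummy_arc)) n2 ->
     CH g n1 = CH g n2).
Definition CAMC (g : pt -> R) (C : list arc) : Prop := exists Lam, CAMC_with g C Lam.

Definition gamma6 (nu : pt) : R := fst nu ^ 6 + snd nu ^ 6.
Definition xi (theta : R) : pt := CHang gamma6 theta.

Definition theta1 : R := acos ((sqrt 5 + 1) / (2 * sqrt 3)).
Definition theta2 : R := PI / 2 - theta1.
Definition theta3 : R := PI / 2 + theta1.
Definition theta4 : R := PI - theta1.
Definition theta5 : R := PI + theta1.
Definition theta6 : R := 3 * PI / 2 - theta1.
Definition theta7 : R := 3 * PI / 2 + theta1.
Definition theta8 : R := - theta1.
Definition rho1 : R := acos (sqrt ((1 + sqrt 5) / 6)).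
Definition rho2 : R := acos (sqrt ((5 - sqrt 5) / 6)).

Definition xi_image (I : R -> Prop) (X : pt) : Prop := exists th, I th /\ X = xi th.
Definition Icc (a b t : R) : Prop := a <= t <= b.

Definition fwd (a b : R) : arc := (xi, a, b).
Definition bwd (a b : R) : arc := (fun t => xi (- t), - b, - a).

(* the curves (C_gamma)_k, with the arcs in traversal order, positively oriented *)
Definition Cgamma1 : list arc :=
  [bwd theta8 theta1; bwd theta2 theta3; bwd theta4 theta5; bwd theta6 theta7].
Definition Cgamma2 : list arc := [fwd theta1 theta2; fwd theta5 theta6].
Definition Cgamma3 : list arc :=
  [bwd theta8 theta1; fwd theta3 (rho2 + PI / 2); fwd (rho1 + PI) theta6].
Definition Cgamma4 : list arc :=
  [fwd theta1 rho1; fwd (rho2 + 3 * PI / 2) (theta8 + 2 * PI);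
   fwd theta3 (rho1 + PI / 2); fwd rho2 theta2;
   fwd theta5 (rho1 + PI); fwd (rho2 + PI / 2) theta4;
   fwd theta7 (rho1 + 3 * PI / 2); fwd (rho2 + PI) theta6].
Definition Cgamma5 : list arc := [bwd theta1 rho1; bwd theta8 theta1; bwd (- rho1) theta8].

From Stdlib Require Import Reals Lra Lia List ZArith FunctionalExtensionality Classical.
Open Scope R_scope.

(** Everything rests on the explicit polynomial form of xi = xi_gamma (part (i))
    and on its derivative xi'(t) = radius(t) (- sin t, cos t), where
    radius = gamma + gamma'' = 45 cos^2 sin^2 - 5 is negative between the cusps
    -theta_1 and theta_1 and positive between theta_1 and pi/2 - theta_1 (up to
    quarter turns, which xi commutes with).
    - Every arc of the curves (C_gamma)_j is t |-> xi(k t) with k = +-1.  On such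
      an arc the normal is +-(cos kt, sin kt), so the Cahn--Hoffman field is +-
      the arc itself and the anisotropic curvature is the constant -+1; when the
      arc turns towards its normal, this gives a closed CAMC curve with curvature
      -1 as soon as consecutive endpoints agree (a table of values of xi), and
      positive area by an explicit primitive of the area density (part (iii)).
      For (C_gamma)_5 the middle arc has the other sign (part (iv)).
    - The Wulff shape (part (ii)) is identified through support lines: the
      convex arcs xi([rho_1, rho_2] + n pi/2) lie in the Wulff body and on its
      boundary, and a boundary point touching the support line of direction e_p
      must be xi(p), with p outside the excluded intervals around the axes. *)

Lemma deriv_unique f t l : derivable_pt_lim f t l -> deriv f t = l.
Proof.
  intro H. unfold deriv.
  assert (Hex : exists l, derivable_pt_lim f t l) by (exists l; exact H).
  exact (uniqueness_limite f t _ _ (epsilon_spec (inhabits 0) _ Hex) H).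
Qed.

Lemma derivable_pt_lim_local f g a b t l : a < t < b ->
  (forall x, a < x < b -> f x = g x) -> derivable_pt_lim g t l -> derivable_pt_lim f t l.
Proof.
  intros Ht Hfg Hg eps Heps. destruct (Hg eps Heps) as [d Hd].
  assert (Hpos : 0 < Rmin d (Rmin (t - a) (b - t))).
  { apply Rmin_pos; [apply cond_pos | apply Rmin_pos; lra]. }
  exists (mkposreal _ Hpos). intros h Hh Hhd; simpl in Hhd.
  pose proof (Rmin_l d (Rmin (t - a) (b - t))). pose proof (Rmin_r d (Rmin (t - a) (b - t))).
  pose proof (Rmin_l (t - a) (b - t)). pose proof (Rmin_r (t - a) (b - t)).
  apply Rabs_def2 in Hhd.
  rewrite !Hfg by lra. apply Hd; [exact Hh | apply Rabs_def1; lra].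
Qed.

Lemma derivable_pt_lim_linear k t : derivable_pt_lim (fun x => k * x) t k.
Proof.
  pose proof (derivable_pt_lim_scal id k t 1 (derivable_pt_lim_id t)) as H.
  rewrite Rmult_1_r in H. exact H.
Qed.

Lemma RiemannInt_primitive F h a b (pr : Riemann_integrable h a b) :
  (forall x, derivable_pt_lim F x (h x)) -> continuity h -> RiemannInt pr = F b - F a.
Proof.
  intros HF Hc.
  set (dF := fun x => exist (fun l => derivable_pt_lim F x l) (h x) (HF x) : derivable_pt F x).
  exact (FTC_Riemann (@mkC1 F dF Hc) pr).
Qed.

(* Identities on the unit circle are checked after homogenising one side by
   the factor u = cos^2 + sin^2 = 1. *)
Lemma eq_by_unit_factor u X Y : u = 1 -> u * X = Y -> X = Y.
Proof. intros -> <-. ring. Qed.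

(** ** Trigonometric polynomials and their derivatives

    All functions of the angle met below are polynomials in [cos (k t)] and
    [sin (k t)].  We reify them into a small syntax with a symbolic derivative,
    which yields their derivatives, their smoothness and their continuity. *)

Inductive trig_poly :=
  | TConst (r : R) | TCos | TSin | TCosK (k : R) | TSinK (k : R)
  | TAdd (p q : trig_poly) | TMul (p q : trig_poly) | TPow (p : trig_poly) (n : nat).

Fixpoint teval (p : trig_poly) (t : R) : R :=
  match p with
  | TConst r => r | TCos => cos t | TSin => sin t
  | TCosK k => cos (k * t) | TSinK k => sin (k * t)
  | TAdd p q => teval p t + teval q t | TMul p q => teval p t * teval q t
  | TPow p n => teval p t ^ n
  end.

Fixpoint tderiv (p : trig_poly) : trig_poly :=
  match p with
  | TConst _ => TConst 0 | TCos => TMul (TConst (-1)) TSin | TSin => TCos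
  | TCosK k => TMul (TConst (- k)) (TSinK k) | TSinK k => TMul (TConst k) (TCosK k)
  | TAdd p q => TAdd (tderiv p) (tderiv q)
  | TMul p q => TAdd (TMul (tderiv p) q) (TMul p (tderiv q))
  | TPow p n => TMul (TMul (TConst (INR n)) (TPow p (pred n))) (tderiv p)
  end.

Lemma tderiv_correct p t : derivable_pt_lim (teval p) t (teval (tderiv p) t).
Proof.
  induction p; simpl.
  - apply derivable_pt_lim_const.
  - replace (-1 * sin t) with (- sin t) by ring. apply derivable_pt_lim_cos.
  - apply derivable_pt_lim_sin.
  - replace (- k * sin (k * t)) with (- sin (k * t) * k) by ring.
    apply (derivable_pt_lim_comp (fun t => k * t) cos);
      [apply derivable_pt_lim_linear | apply derivable_pt_lim_cos].
  - replace (k * cos (k * t)) with (cos (k * t) * k) by ring.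
    apply (derivable_pt_lim_comp (fun t => k * t) sin);
      [apply derivable_pt_lim_linear | apply derivable_pt_lim_sin].
  - now apply derivable_pt_lim_plus.
  - now apply derivable_pt_lim_mult.
  - apply (derivable_pt_lim_comp (teval p) (fun x => x ^ n)); auto.
    apply derivable_pt_lim_pow.
Qed.

Ltac reify_trig t e :=
  lazymatch e with
  | cos (?k * t) => constr:(TCosK k)
  | sin (?k * t) => constr:(TSinK k)
  | cos t => constr:(TCos)
  | sin t => constr:(TSin)
  | ?a + ?b => let x := reify_trig t a in let y := reify_trig t b in constr:(TAdd x y)
  | ?a - ?b => let x := reify_trig t a in let y := reify_trig t b in
               constr:(TAdd x (TMul (TConst (-1)) y))
  | - ?a => let x := reify_trig t a in constr:(TMul (TConst (-1)) x)
  | ?a * ?b => let x := reify_trig t a in let y := reify_trig t b in constr:(TMul x y)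
  | ?a / ?b => let x := reify_trig t a in constr:(TMul x (TConst (/ b)))
  | ?a ^ ?n => let x := reify_trig t a in constr:(TPow x n)
  | _ => constr:(TConst e)
  end.

Lemma derivable_trig (f : R -> R) E : (forall t, f t = teval E t) ->
  forall t, derivable_pt_lim f t (teval (tderiv E) t).
Proof.
  intros H t. replace f with (teval E) by (extensionality x; now rewrite H).
  apply tderiv_correct.
Qed.

Lemma continuous_trig (f : R -> R) E : (forall t, f t = teval E t) ->
  forall t, continuity_pt f t.
Proof.
  intros H t. apply derivable_continuous_pt. eexists. exact (derivable_trig f E H t).
Qed.

Lemma smooth_trig (f : R -> R) E a b : (forall t, f t = teval E t) -> smooth_on f a b.
Proof.
  intro H. exists (fun n => teval (Nat.iter n tderiv E)). split.
  - intros t _. symmetry. apply H.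
  - intros n t _. apply tderiv_correct.
Qed.

Lemma pdist_self u : pdist u u = 0.
Proof.
  unfold pdist, pnorm, dot, padd, pscal; simpl.
  replace (_ * _ + _ * _) with 0 by ring. apply sqrt_0.
Qed.

Lemma pdist_sym u v : pdist u v = pdist v u.
Proof. unfold pdist, pnorm, dot, padd, pscal; simpl. f_equal. ring. Qed.

Lemma pdist_le_coords u v : pdist u v <= Rabs (fst u - fst v) + Rabs (snd u - snd v).
Proof.
  unfold pdist, pnorm, dot, padd, pscal; simpl.
  pose proof (Rabs_pos (fst u - fst v)). pose proof (Rabs_pos (snd u - snd v)).
  rewrite <- (sqrt_pow2 (Rabs (fst u - fst v) + Rabs (snd u - snd v))) by lra.
  apply sqrt_le_1_alt.
  pose proof (pow2_abs (fst u - fst v)). pose proof (pow2_abs (snd u - snd v)).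
  replace (fst u + -1 * fst v) with (fst u - fst v) by ring.
  replace (snd u + -1 * snd v) with (snd u - snd v) by ring. nra.
Qed.

Lemma coords_le_pdist u v :
  Rabs (fst u - fst v) <= pdist u v /\ Rabs (snd u - snd v) <= pdist u v.
Proof.
  unfold pdist, pnorm, dot, padd, pscal; simpl.
  replace (fst u + -1 * fst v) with (fst u - fst v) by ring.
  replace (snd u + -1 * snd v) with (snd u - snd v) by ring.
  split; [rewrite <- (sqrt_pow2 (Rabs (fst u - fst v))) by apply Rabs_pos
         |rewrite <- (sqrt_pow2 (Rabs (snd u - snd v))) by apply Rabs_pos];
  apply sqrt_le_1_alt; rewrite pow2_abs; simpl;
  [pose proof (Rle_0_sqr (snd u - snd v)) | pose proof (Rle_0_sqr (fst u - fst v))];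
  unfold Rsqr in *; lra.
Qed.

(* Cauchy--Schwarz: moving by distance d changes a support function by <= d. *)
Lemma dot_diff_le_pdist X Y nu : unit_vec nu -> dot X nu - dot Y nu <= pdist X Y.
Proof.
  intro Hu. destruct X as [x1 x2], Y as [y1 y2], nu as [a b].
  unfold unit_vec, pdist, pnorm, dot, padd, pscal in *; simpl in *.
  pose proof (sqrt_cauchy (x1 + -1 * y1) (x2 + -1 * y2) a b) as H. unfold Rsqr in H.
  replace (a * a + b * b) with 1 in H by lra. rewrite sqrt_1, Rmult_1_r in H. lra.
Qed.

Lemma pt_eq_of_approx (u v : pt) :
  (forall e, 0 < e -> exists w, pdist w u < e /\ pdist w v < e) -> u = v.
Proof.
  intro H.
  assert (Hzero : forall x, (forall e, 0 < e -> Rabs x < 2 * e) -> x = 0).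
  { intros x Hx. destruct (Req_dec x 0) as [|Hne]; [assumption|].
    pose proof (Rabs_pos_lt x Hne). specialize (Hx (Rabs x / 2) ltac:(lra)). lra. }
  assert (Hcoord : forall x y z e, Rabs (z - x) < e -> Rabs (z - y) < e -> Rabs (x - y) < 2 * e).
  { intros x y z e Hx Hy. replace (x - y) with (- (z - x) + (z - y)) by ring.
    eapply Rle_lt_trans; [apply Rabs_triang|]. rewrite Rabs_Ropp. lra. }
  destruct u as [u1 u2], v as [v1 v2]. f_equal.
  - enough (u1 - v1 = 0) by lra. apply Hzero. intros e He.
    destruct (H e He) as [w [Hu Hv]].
    destruct (coords_le_pdist w (u1, u2)), (coords_le_pdist w (v1, v2)).
    simpl in *. apply (Hcoord _ _ (fst w)); lra.
  - enough (u2 - v2 = 0) by lra. apply Hzero. intros e He.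
    destruct (H e He) as [w [Hu Hv]].
    destruct (coords_le_pdist w (u1, u2)), (coords_le_pdist w (v1, v2)).
    simpl in *. apply (Hcoord _ _ (snd w)); lra.
Qed.

Lemma lim_right_unique h a L1 L2 : lim_right h a L1 -> lim_right h a L2 -> L1 = L2.
Proof.
  intros H1 H2. apply pt_eq_of_approx. intros e He.
  destruct (H1 e He) as [d1 [Hd1 Hd1']], (H2 e He) as [d2 [Hd2 Hd2']].
  pose proof (Rmin_l d1 d2). pose proof (Rmin_r d1 d2). pose proof (Rmin_pos d1 d2 Hd1 Hd2).
  exists (h (a + Rmin d1 d2 / 2)). split; [apply Hd1' | apply Hd2']; lra.
Qed.

Lemma lim_left_unique h b L1 L2 : lim_left h b L1 -> lim_left h b L2 -> L1 = L2.
Proof.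
  intros H1 H2. apply pt_eq_of_approx. intros e He.
  destruct (H1 e He) as [d1 [Hd1 Hd1']], (H2 e He) as [d2 [Hd2 Hd2']].
  pose proof (Rmin_l d1 d2). pose proof (Rmin_r d1 d2). pose proof (Rmin_pos d1 d2 Hd1 Hd2).
  exists (h (b - Rmin d1 d2 / 2)). split; [apply Hd1' | apply Hd2']; lra.
Qed.

Lemma continuity_pt_eps f x : continuity_pt f x ->
  forall eps, 0 < eps -> exists d, 0 < d /\ forall y, Rabs (y - x) < d -> Rabs (f y - f x) < eps.
Proof.
  intros H eps He.
  unfold continuity_pt, continue_in, limit1_in, limit_in, D_x, no_cond in H; simpl in H.
  unfold R_dist in H. destruct (H eps He) as [d [Hd Hd2]].
  exists d. split; [exact Hd|]. intros y Hy. destruct (Req_dec x y) as [<-|Hxy].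
  - replace (f x - f x) with 0 by ring. now rewrite Rabs_R0.
  - apply Hd2. split; [split; [exact I | exact Hxy] | exact Hy].
Qed.

Lemma pt_continuity_eps (H : R -> pt) t :
  continuity_pt (fun s => fst (H s)) t -> continuity_pt (fun s => snd (H s)) t ->
  forall eps, 0 < eps -> exists d, 0 < d /\ forall s, Rabs (s - t) < d -> pdist (H s) (H t) < eps.
Proof.
  intros H1 H2 eps He.
  destruct (continuity_pt_eps _ _ H1 (eps / 2) ltac:(lra)) as [d1 [Hd1 Hd1']].
  destruct (continuity_pt_eps _ _ H2 (eps / 2) ltac:(lra)) as [d2 [Hd2 Hd2']].
  exists (Rmin d1 d2). split; [now apply Rmin_pos|].
  intros s Hs. pose proof (Rmin_l d1 d2). pose proof (Rmin_r d1 d2).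
  pose proof (pdist_le_coords (H s) (H t)).
  pose proof (Hd1' s ltac:(lra)). pose proof (Hd2' s ltac:(lra)). simpl in *. lra.
Qed.

Lemma continuous_on_closed_of_continuous f a b :
  (forall t, continuity_pt (fun s => fst (f s)) t) ->
  (forall t, continuity_pt (fun s => snd (f s)) t) -> continuous_on_closed f a b.
Proof.
  intros H1 H2 t _ eps He.
  destruct (pt_continuity_eps f t (H1 t) (H2 t) eps He) as [d [Hd Hd']].
  exists d. split; [exact Hd|]. intros s _. apply Hd'.
Qed.

Lemma lim_right_of_continuous h H a b : a < b -> (forall t, a < t < b -> h t = H t) ->
  continuity_pt (fun s => fst (H s)) a -> continuity_pt (fun s => snd (H s)) a ->
  lim_right h a (H a).
Proof.
  intros Hab Heq H1 H2 eps He.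
  destruct (pt_continuity_eps H a H1 H2 eps He) as [d [Hd Hd']].
  exists (Rmin (b - a) d). split; [apply Rmin_pos; lra|].
  intros t Ht. pose proof (Rmin_l (b - a) d). pose proof (Rmin_r (b - a) d).
  rewrite Heq by lra. apply Hd'. rewrite Rabs_right; lra.
Qed.

Lemma lim_left_of_continuous h H a b : a < b -> (forall t, a < t < b -> h t = H t) ->
  continuity_pt (fun s => fst (H s)) b -> continuity_pt (fun s => snd (H s)) b ->
  lim_left h b (H b).
Proof.
  intros Hab Heq H1 H2 eps He.
  destruct (pt_continuity_eps H b H1 H2 eps He) as [d [Hd Hd']].
  exists (Rmin (b - a) d). split; [apply Rmin_pos; lra|].
  intros t Ht. pose proof (Rmin_l (b - a) d). pose proof (Rmin_r (b - a) d).
  rewrite Heq by lra. apply Hd'. rewrite Rabs_left; lra.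
Qed.

(** ** The Cahn--Hoffman map of gamma(nu) = nu_1^6 + nu_2^6 *)

Definition CHx (c s : R) : R := c * (c ^ 6 + 6 * c ^ 4 * s ^ 2 - 5 * s ^ 6).
Definition CHy (c s : R) : R := s * (- 5 * c ^ 6 + 6 * c ^ 2 * s ^ 4 + s ^ 6).

Ltac trig_form f E HE :=
  evar (E : trig_poly);
  assert (HE : forall t, f t = teval E t);
  [ subst E; intro;
    unfold CHx, CHy, gamma6, padd, pscal, rot_ccw; cbn [fst snd];
    match goal with |- ?l = teval ?E ?t =>
      let e := reify_trig t l in instantiate (1 := e) end;
    simpl; unfold Rdiv; ring
  | ].

(* The tangential gradient of gamma is 6 a b (b^4 - a^4) J(a, b); adding
   gamma(a, b) (a, b) gives the polynomial map (CHx, CHy). *)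
Lemma CH_gamma6 a b : CH gamma6 (a, b) = (CHx a b, CHy a b).
Proof.
  unfold CH, grad_S1.
  trig_form (fun s => gamma6 (padd (pscal (cos s) (a, b)) (pscal (sin s) (rot_ccw (a, b))))) E HE.
  rewrite (deriv_unique _ _ _ (derivable_trig _ _ HE 0)).
  subst E. simpl. rewrite cos_0, sin_0.
  unfold CHx, CHy, pscal, gamma6, rot_ccw, padd; simpl. f_equal; field.
Qed.

Lemma xi_formula t : xi t = (CHx (cos t) (sin t), CHy (cos t) (sin t)).
Proof. apply CH_gamma6. Qed.

Lemma cos2_sin2 t : cos t ^ 2 + sin t ^ 2 = 1.
Proof. rewrite <- (sin2_cos2 t). unfold Rsqr. ring. Qed.

(* The radius of curvature gamma + gamma'' of xi as a function of the angle;
   it changes sign at the cusps theta_1, ..., theta_8. *)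
Definition radius (t : R) : R := 45 * cos t ^ 2 * sin t ^ 2 - 5.

Definition gam (t : R) : R := cos t ^ 6 + sin t ^ 6.

Lemma xi_deriv_x t : derivable_pt_lim (fun t => fst (xi t)) t (- sin t * radius t).
Proof.
  trig_form (fun t => CHx (cos t) (sin t)) E HE.
  replace (fun t => fst (xi t)) with (fun t => CHx (cos t) (sin t))
    by (extensionality x; now rewrite xi_formula).
  replace (- sin t * radius t) with (teval (tderiv E) t); [apply (derivable_trig _ _ HE)|].
  subst E. simpl. unfold radius. pose proof (cos2_sin2 t) as Hcs.
  transitivity (- sin t * ((cos t ^ 2 + sin t ^ 2) *
     (45 * cos t ^ 2 * sin t ^ 2 - 5 * (cos t ^ 2 + sin t ^ 2) ^ 2))); [ring|].
  rewrite Hcs. ring.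
Qed.

Lemma xi_deriv_y t : derivable_pt_lim (fun t => snd (xi t)) t (cos t * radius t).
Proof.
  trig_form (fun t => CHy (cos t) (sin t)) E HE.
  replace (fun t => snd (xi t)) with (fun t => CHy (cos t) (sin t))
    by (extensionality x; now rewrite xi_formula).
  replace (cos t * radius t) with (teval (tderiv E) t); [apply (derivable_trig _ _ HE)|].
  subst E. simpl. unfold radius. pose proof (cos2_sin2 t) as Hcs.
  transitivity (cos t * ((cos t ^ 2 + sin t ^ 2) *
     (45 * cos t ^ 2 * sin t ^ 2 - 5 * (cos t ^ 2 + sin t ^ 2) ^ 2))); [ring|].
  rewrite Hcs. ring.
Qed.

Lemma cos_add_quarter t : cos (t + PI / 2) = - sin t.
Proof. rewrite cos_plus, cos_PI2, sin_PI2. ring. Qed.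
Lemma sin_add_quarter t : sin (t + PI / 2) = cos t.
Proof. rewrite sin_plus, cos_PI2, sin_PI2. ring. Qed.

Lemma xi_quarter t : xi (t + PI / 2) = rot_ccw (xi t).
Proof.
  rewrite !xi_formula, cos_add_quarter, sin_add_quarter.
  unfold rot_ccw, CHx, CHy; simpl. f_equal; ring.
Qed.

Lemma xi_opp t : xi (- t) = (fst (xi t), - snd (xi t)).
Proof. rewrite !xi_formula, cos_neg, sin_neg. unfold CHx, CHy; simpl. f_equal; ring. Qed.

Lemma xi_quarters n t : xi (t + INR n * (PI / 2)) = Nat.iter n rot_ccw (xi t).
Proof.
  induction n as [|n IH]; simpl Nat.iter.
  - simpl. now rewrite Rmult_0_l, Rplus_0_r.
  - rewrite S_INR, <- IH, <- xi_quarter. f_equal. ring.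
Qed.

Lemma xi_period t : xi (t + 2 * PI) = xi t.
Proof.
  replace (t + 2 * PI) with (t + INR 4 * (PI / 2)) by (simpl; field).
  rewrite xi_quarters. destruct (xi t). unfold rot_ccw; simpl. f_equal; ring.
Qed.

Lemma xi_Zperiod q t : xi (t + IZR q * (2 * PI)) = xi t.
Proof.
  assert (Hnat : forall n t, xi (t + INR n * (2 * PI)) = xi t).
  { induction n as [|n IH]; intro s; [simpl; f_equal; ring|].
    rewrite S_INR, <- (IH s), <- (xi_period (s + INR n * (2 * PI))). f_equal. ring. }
  destruct (Z_le_gt_dec 0 q).
  - rewrite <- (Z2Nat.id q), <- INR_IZR_INZ by assumption. apply Hnat.
  - replace q with (- Z.of_nat (Z.to_nat (- q)))%Z by (rewrite Z2Nat.id; lia).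
    rewrite opp_IZR, <- INR_IZR_INZ.
    rewrite <- (Hnat (Z.to_nat (- q)) (t + - INR (Z.to_nat (- q)) * (2 * PI))).
    f_equal. ring.
Qed.

Lemma radius_quarters n t : radius (t + INR n * (PI / 2)) = radius t.
Proof.
  induction n as [|n IH]; [simpl; now rewrite Rmult_0_l, Rplus_0_r|].
  rewrite S_INR, <- IH. replace (t + (INR n + 1) * (PI / 2)) with
    ((t + INR n * (PI / 2)) + PI / 2) by ring.
  unfold radius. rewrite cos_add_quarter, sin_add_quarter. ring.
Qed.

Lemma radius_opp t : radius (- t) = radius t.
Proof. unfold radius. rewrite cos_neg, sin_neg. ring. Qed.

Lemma gam_pos t : 0 < gam t.
Proof.
  unfold gam. pose proof (cos2_sin2 t) as Hcs.
  set (c := cos t) in *. set (s := sin t) in *.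
  replace (c ^ 6 + s ^ 6) with ((c^2 + s^2) ^ 3 - 3 * (c^2 * s^2) * (c^2 + s^2)) by ring.
  rewrite Hcs. pose proof (pow2_ge_0 (c^2 - s^2)).
  assert (4 * (c^2 * s^2) <= 1) by (replace 1 with ((c^2 + s^2) ^ 2) by (rewrite Hcs; ring); nra).
  lra.
Qed.

Lemma sqrt5_sq : sqrt 5 * sqrt 5 = 5.
Proof. apply sqrt_sqrt. lra. Qed.
Lemma sqrt5_pow n : sqrt 5 ^ S (S n) = 5 * sqrt 5 ^ n.
Proof. simpl. rewrite <- Rmult_assoc, sqrt5_sq. ring. Qed.
Lemma sqrt5_bounds : 2.236 < sqrt 5 < 2.2361.
Proof. pose proof sqrt5_sq. pose proof (sqrt_lt_R0 5 ltac:(lra)). split; nra. Qed.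
Lemma sqrt3_bounds : 1.732 < sqrt 3 < 1.7321.
Proof.
  pose proof (sqrt_sqrt 3 ltac:(lra)). pose proof (sqrt_lt_R0 3 ltac:(lra)). split; nra.
Qed.
Lemma sqrt2_bounds : 1.414 < sqrt 2 < 1.4143.
Proof. pose proof (sqrt_sqrt 2 ltac:(lra)). pose proof Rlt_sqrt2_0. split; nra. Qed.

Lemma cos_PI4_sqrt2 : cos (PI / 4) = sqrt 2 / 2.
Proof.
  rewrite cos_PI4. pose proof Rlt_sqrt2_0. pose proof (sqrt_sqrt 2 ltac:(lra)).
  field_simplify_eq; nra.
Qed.

Definition c_theta1 : R := (sqrt 5 + 1) / (2 * sqrt 3).
Definition s_theta1 : R := (sqrt 5 - 1) / (2 * sqrt 3).

Lemma c_s_theta1_sq : c_theta1 ^ 2 = (3 + sqrt 5) / 6 /\ s_theta1 ^ 2 = (3 - sqrt 5) / 6.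
Proof.
  unfold c_theta1, s_theta1. pose proof sqrt3_bounds. pose proof sqrt5_sq. pose proof (sqrt_sqrt 3 ltac:(lra)).
  split; field_simplify; try lra;
    replace (sqrt 5 ^ 2) with 5 by (simpl; lra); replace (sqrt 3 ^ 2) with 3 by (simpl; lra);
    field.
Qed.

Lemma c_theta1_bounds : 0.934 < c_theta1 < 0.9343.
Proof.
  pose proof sqrt3_bounds. pose proof sqrt5_bounds.
  assert (2 * sqrt 3 * c_theta1 = sqrt 5 + 1) by (unfold c_theta1; field; lra).
  split; nra.
Qed.

Lemma s_theta1_pos : 0 < s_theta1.
Proof. unfold s_theta1. pose proof sqrt3_bounds. pose proof sqrt5_bounds. apply Rdiv_lt_0_compat; lra. Qed.

Lemma cos_theta1 : cos theta1 = c_theta1.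
Proof. apply cos_acos. pose proof c_theta1_bounds. unfold c_theta1 in *. lra. Qed.

Lemma sin_theta1 : sin theta1 = s_theta1.
Proof.
  unfold theta1. fold c_theta1. pose proof c_theta1_bounds. pose proof s_theta1_pos.
  destruct c_s_theta1_sq as [Hc Hs]. pose proof sqrt5_bounds.
  rewrite sin_acos by lra. apply sqrt_lem_1; unfold Rsqr; nra.
Qed.

Definition c_rho1 : R := sqrt ((1 + sqrt 5) / 6).
Definition s_rho1 : R := sqrt ((5 - sqrt 5) / 6).

Lemma c_rho1_sq : c_rho1 ^ 2 = (1 + sqrt 5) / 6.
Proof. apply pow2_sqrt. pose proof sqrt5_bounds. lra. Qed.
Lemma s_rho1_sq : s_rho1 ^ 2 = (5 - sqrt 5) / 6.
Proof. apply pow2_sqrt. pose proof sqrt5_bounds. lra. Qed.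
Lemma cs_rho1_pos : 0 < c_rho1 /\ 0 < s_rho1.
Proof. pose proof sqrt5_bounds. split; apply sqrt_lt_R0; lra. Qed.
Lemma c_rho1_bounds : 0.7343 < c_rho1 < 0.7345.
Proof. pose proof c_rho1_sq. pose proof cs_rho1_pos. pose proof sqrt5_bounds. split; nra. Qed.

Lemma cos_rho1 : cos rho1 = c_rho1.
Proof. apply cos_acos. pose proof c_rho1_bounds. unfold c_rho1 in *. lra. Qed.

Lemma sin_rho1 : sin rho1 = s_rho1.
Proof.
  unfold rho1. fold c_rho1. pose proof c_rho1_bounds. pose proof c_rho1_sq.
  rewrite sin_acos by lra. unfold s_rho1. f_equal. unfold Rsqr. nra.
Qed.

Lemma angle_bounds : 0 < theta1 /\ theta1 < rho1 /\ rho1 < PI / 4.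
Proof.
  pose proof (acos_bound ((sqrt 5 + 1) / (2 * sqrt 3))) as Hth. fold theta1 in Hth.
  pose proof (acos_bound (sqrt ((1 + sqrt 5) / 6))) as Hrho. fold rho1 in Hrho.
  pose proof PI_RGT_0. pose proof c_rho1_bounds. pose proof c_theta1_bounds. pose proof sqrt2_bounds.
  assert (Hrho1 : rho1 < PI / 4).
  { apply (cos_decreasing_0 (PI / 4) rho1); try lra. rewrite cos_rho1, cos_PI4_sqrt2. lra. }
  assert (Hth1 : theta1 < rho1).
  { apply (cos_decreasing_0 rho1 theta1); try lra. rewrite cos_rho1, cos_theta1. lra. }
  repeat split; try lra.
  destruct Hth as [[Hpos | Hzero] _]; [lra|].
  pose proof cos_theta1 as Hc. rewrite <- Hzero, cos_0 in Hc. lra.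
Qed.

Lemma rho2_eq : rho2 = PI / 2 - rho1.
Proof.
  pose proof angle_bounds. pose proof PI_RGT_0.
  unfold rho2. fold s_rho1. rewrite <- sin_rho1, <- cos_shift. apply acos_cos. lra.
Qed.

Lemma radius_neg t : - theta1 < t < theta1 -> radius t < 0.
Proof.
  intro Ht. destruct angle_bounds as [H0 [H1 H2]]. pose proof PI_RGT_0.
  assert (Hc : c_theta1 < cos t).
  { rewrite <- cos_theta1. destruct (Rle_dec 0 t).
    - apply cos_decreasing_1; lra.
    - rewrite <- (cos_neg t). apply cos_decreasing_1; lra. }
  destruct c_s_theta1_sq as [Hc1 _]. pose proof c_theta1_bounds. pose proof sqrt5_bounds.
  pose proof sqrt5_sq. pose proof (cos2_sin2 t).
  assert (cos t ^ 2 > (3 + sqrt 5) / 6) by nra.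
  unfold radius. replace (sin t ^ 2) with (1 - cos t ^ 2) by lra.
  set (x := cos t ^ 2) in *. nra.
Qed.

Lemma radius_pos t : theta1 < t < PI / 2 - theta1 -> 0 < radius t.
Proof.
  intro Ht. destruct angle_bounds as [H0 [H1 H2]]. pose proof PI_RGT_0.
  assert (Hc : cos t < c_theta1) by (rewrite <- cos_theta1; apply cos_decreasing_1; lra).
  assert (Hs : sin t < c_theta1) by (rewrite <- cos_shift, <- cos_theta1; apply cos_decreasing_1; lra).
  assert (0 < cos t) by (apply cos_gt_0; lra).
  assert (0 < sin t) by (apply sin_gt_0; lra).
  destruct c_s_theta1_sq as [Hc1 _]. pose proof c_theta1_bounds. pose proof sqrt5_bounds.
  pose proof sqrt5_sq. pose proof (cos2_sin2 t).
  assert (cos t ^ 2 < (3 + sqrt 5) / 6) by nra.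
  assert (sin t ^ 2 < (3 + sqrt 5) / 6) by nra.
  unfold radius. replace (sin t ^ 2) with (1 - cos t ^ 2) in * by lra.
  set (x := cos t ^ 2) in *. nra.
Qed.

Definition cusp : R := CHx c_theta1 s_theta1.

Lemma xi_theta1 : xi theta1 = (cusp, - cusp).
Proof.
  rewrite xi_formula, cos_theta1, sin_theta1. unfold cusp. f_equal.
  enough (CHx c_theta1 s_theta1 + CHy c_theta1 s_theta1 = 0) by lra.
  assert (Hhom : forall l a b, CHx (l * a) (l * b) + CHy (l * a) (l * b) = l ^ 7 * (CHx a b + CHy a b))
    by (intros; unfold CHx, CHy; ring).
  unfold c_theta1, s_theta1, Rdiv. rewrite (Rmult_comm (sqrt 5 + 1)), (Rmult_comm (sqrt 5 - 1)), Hhom.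
  replace (CHx (sqrt 5 + 1) (sqrt 5 - 1) + CHy (sqrt 5 + 1) (sqrt 5 - 1)) with 0; [ring|].
  unfold CHx, CHy. ring_simplify. rewrite !sqrt5_pow. simpl. ring.
Qed.

Definition vertex : R := CHx c_rho1 s_rho1.

Lemma xi_rho1 : xi rho1 = (vertex, 0).
Proof.
  rewrite xi_formula, cos_rho1, sin_rho1. unfold vertex. f_equal.
  unfold CHy. replace (-5 * c_rho1 ^ 6 + 6 * c_rho1 ^ 2 * s_rho1 ^ 4 + s_rho1 ^ 6) with
    (-5 * (c_rho1 ^ 2) ^ 3 + 6 * c_rho1 ^ 2 * (s_rho1 ^ 2) ^ 2 + (s_rho1 ^ 2) ^ 3) by ring.
  rewrite c_rho1_sq, s_rho1_sq. field_simplify. rewrite !sqrt5_pow. simpl. field.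
Qed.

Lemma vertex_eq : vertex = c_rho1 * (2 * sqrt 5 - 4).
Proof.
  unfold vertex, CHx. f_equal.
  replace (c_rho1 ^ 6 + 6 * c_rho1 ^ 4 * s_rho1 ^ 2 - 5 * s_rho1 ^ 6) with
    ((c_rho1 ^ 2) ^ 3 + 6 * (c_rho1 ^ 2) ^ 2 * s_rho1 ^ 2 - 5 * (s_rho1 ^ 2) ^ 3) by ring.
  rewrite c_rho1_sq, s_rho1_sq. field_simplify. rewrite !sqrt5_pow. simpl. field.
Qed.

Lemma xi_opp_theta1 : xi (- theta1) = (cusp, cusp).
Proof. rewrite xi_opp, xi_theta1. simpl. f_equal; ring. Qed.
Lemma xi_opp_rho1 : xi (- rho1) = (vertex, 0).
Proof. rewrite xi_opp, xi_rho1. simpl. f_equal; ring. Qed.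

Ltac xi_value base n Hbase :=
  match goal with |- xi ?t = _ =>
    replace t with (base + INR n * (PI / 2));
    [ rewrite xi_quarters, Hbase; simpl; unfold rot_ccw; simpl; f_equal; ring
    | simpl INR; unfold theta2, theta3, theta4, theta5, theta6, theta7, theta8;
      try rewrite rho2_eq; field ]
  end.

Lemma xi_theta2 : xi theta2 = (- cusp, cusp).   Proof. xi_value (- theta1) 1%nat xi_opp_theta1. Qed.
Lemma xi_theta3 : xi theta3 = (cusp, cusp).     Proof. xi_value theta1 1%nat xi_theta1. Qed.
Lemma xi_theta4 : xi theta4 = (- cusp, - cusp). Proof. xi_value (- theta1) 2%nat xi_opp_theta1. Qed.
Lemma xi_theta5 : xi theta5 = (- cusp, cusp).   Proof. xi_value theta1 2%nat xi_theta1. Qed.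
Lemma xi_theta6 : xi theta6 = (cusp, - cusp).   Proof. xi_value (- theta1) 3%nat xi_opp_theta1. Qed.
Lemma xi_theta7 : xi theta7 = (- cusp, - cusp). Proof. xi_value theta1 3%nat xi_theta1. Qed.
Lemma xi_theta8 : xi theta8 = (cusp, cusp).     Proof. apply xi_opp_theta1. Qed.
Lemma xi_theta8_2PI : xi (theta8 + 2 * PI) = (cusp, cusp).
Proof. rewrite xi_period. apply xi_theta8. Qed.
Lemma xi_rho2 : xi rho2 = (0, vertex).         Proof. xi_value (- rho1) 1%nat xi_opp_rho1. Qed.
Lemma xi_rho1_1 : xi (rho1 + PI / 2) = (0, vertex).      Proof. xi_value rho1 1%nat xi_rho1. Qed.
Lemma xi_rho1_2 : xi (rho1 + PI) = (- vertex, 0).        Proof. xi_value rho1 2%nat xi_rho1. Qed.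
Lemma xi_rho1_3 : xi (rho1 + 3 * PI / 2) = (0, - vertex). Proof. xi_value rho1 3%nat xi_rho1. Qed.
Lemma xi_rho2_1 : xi (rho2 + PI / 2) = (- vertex, 0).    Proof. xi_value (- rho1) 2%nat xi_opp_rho1. Qed.
Lemma xi_rho2_2 : xi (rho2 + PI) = (0, - vertex).        Proof. xi_value (- rho1) 3%nat xi_opp_rho1. Qed.
Lemma xi_rho2_3 : xi (rho2 + 3 * PI / 2) = (vertex, 0).  Proof. xi_value (- rho1) 4%nat xi_opp_rho1. Qed.

(** ** Arcs of the form t |-> xi(k t), k = +-1

    All arcs of the curves (C_gamma)_j are parametrisations t |-> xi(k t) of
    pieces of xi(S^1), with k = 1 (fwd) or k = -1 (bwd).  Since
    xi'(t) = radius(t) (- sin t, cos t), on an interval where the radius of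
    curvature has constant sign e = +-1 the right-hand normal is
    k e (cos kt, sin kt); as xi_gamma is odd-homogeneous, the Cahn--Hoffman
    field is then k e times the arc itself, so the anisotropic curvature is -k e. *)

(* xi_gamma is odd and homogeneous of degree 7, so CH(+-nu) = +-CH(nu). *)
Lemma CH_signed_unit sg t : sg * sg = 1 ->
  CH gamma6 (sg * cos t, sg * sin t) = (sg * fst (xi t), sg * snd (xi t)).
Proof.
  intro Hsg. rewrite CH_gamma6, xi_formula; simpl.
  assert (H7 : sg ^ 7 = sg) by (replace (sg ^ 7) with (sg * (sg * sg) ^ 3) by ring; rewrite Hsg; ring).
  f_equal; [transitivity (sg ^ 7 * CHx (cos t) (sin t)) | transitivity (sg ^ 7 * CHy (cos t) (sin t))];
    solve [unfold CHx, CHy; ring | now rewrite H7].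
Qed.

Lemma sign_mult k e : k * k = 1 -> e * e = 1 -> (k * e) * (k * e) = 1.
Proof. intros Hk He. transitivity ((k * k) * (e * e)); [ring|]. rewrite Hk, He. ring. Qed.

Section XiParametrisation.

Variables (f : R -> pt) (k : R).
Hypothesis k_sign : k * k = 1.
Hypothesis f_param : forall t, f t = xi (k * t).

Lemma xi_param_deriv_x t :
  derivable_pt_lim (fun t => fst (f t)) t (k * (- sin (k * t) * radius (k * t))).
Proof.
  replace (fun t => fst (f t)) with (comp (fun t => fst (xi t)) (fun t => k * t))
    by (extensionality x; unfold comp; now rewrite f_param).
  rewrite Rmult_comm. apply derivable_pt_lim_comp;
    [apply derivable_pt_lim_linear | apply xi_deriv_x].
Qed.

Lemma xi_param_deriv_y t :
  derivable_pt_lim (fun t => snd (f t)) t (k * (cos (k * t) * radius (k * t))).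
Proof.
  replace (fun t => snd (f t)) with (comp (fun t => snd (xi t)) (fun t => k * t))
    by (extensionality x; unfold comp; now rewrite f_param).
  rewrite Rmult_comm. apply derivable_pt_lim_comp;
    [apply derivable_pt_lim_linear | apply xi_deriv_y].
Qed.

Lemma xi_param_dvec t :
  dvec f t = (k * (- sin (k * t) * radius (k * t)), k * (cos (k * t) * radius (k * t))).
Proof.
  unfold dvec. now rewrite (deriv_unique _ _ _ (xi_param_deriv_x t)),
    (deriv_unique _ _ _ (xi_param_deriv_y t)).
Qed.

Lemma xi_param_speed2 t : dot (dvec f t) (dvec f t) = radius (k * t) * radius (k * t).
Proof.
  rewrite xi_param_dvec. unfold dot; simpl. pose proof (cos2_sin2 (k * t)) as Hcs.
  transitivity (k * k * (radius (k * t) * radius (k * t)) * (cos (k * t) ^ 2 + sin (k * t) ^ 2));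
    [ring|]. rewrite k_sign, Hcs. ring.
Qed.

Variable e : R.
Hypothesis e_sign : e * e = 1.

Lemma xi_param_normal t : 0 < e * radius (k * t) ->
  normal f t = (k * e * cos (k * t), k * e * sin (k * t)).
Proof.
  intro Hr. unfold normal, pnorm. rewrite xi_param_speed2.
  replace (radius (k * t) * radius (k * t)) with ((e * radius (k * t)) ^ 2)
    by (transitivity (e * e * (radius (k * t) * radius (k * t))); [ring | rewrite e_sign; ring]).
  rewrite sqrt_pow2 by lra. rewrite xi_param_dvec. unfold rot_cw, pscal; simpl.
  assert (He : e <> 0) by (intro; subst; lra).
  assert (Hinv : / e = e) by (apply (Rmult_eq_reg_l e); [rewrite Rinv_r by exact He; lra | exact He]).
  assert (radius (k * t) <> 0) by (intro Hz; rewrite Hz in Hr; lra).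
  f_equal; rewrite Rinv_mult, Hinv; field; assumption.
Qed.

Lemma xi_param_CH_field t : 0 < e * radius (k * t) ->
  CH_field gamma6 f t = (k * e * fst (f t), k * e * snd (f t)).
Proof.
  intro Hr. unfold CH_field. rewrite (xi_param_normal t Hr), f_param.
  apply CH_signed_unit, sign_mult; assumption.
Qed.

Lemma xi_param_aniso_curv a b t : (forall x, a < x < b -> 0 < e * radius (k * x)) ->
  a < t < b -> aniso_curv gamma6 f t = - (k * e).
Proof.
  intros Hr Ht. unfold aniso_curv.
  assert (HD : dvec (CH_field gamma6 f) t = (k * e * (k * (- sin (k * t) * radius (k * t))),
                                          k * e * (k * (cos (k * t) * radius (k * t))))).
  { unfold dvec. f_equal; apply deriv_unique.
    - apply (derivable_pt_lim_local _ (fun x => k * e * fst (f x)) a b); [exact Ht| |].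
      + intros x Hx. now rewrite (xi_param_CH_field x (Hr x Hx)).
      + apply derivable_pt_lim_scal, xi_param_deriv_x.
    - apply (derivable_pt_lim_local _ (fun x => k * e * snd (f x)) a b); [exact Ht| |].
      + intros x Hx. now rewrite (xi_param_CH_field x (Hr x Hx)).
      + apply derivable_pt_lim_scal, xi_param_deriv_y. }
  assert (Hscal : dot (dvec (CH_field gamma6 f) t) (dvec f t) = k * e * dot (dvec f t) (dvec f t))
    by (rewrite HD, xi_param_dvec; unfold dot; simpl; ring).
  rewrite Hscal, xi_param_speed2.
  pose proof (Hr t Ht). assert (radius (k * t) <> 0) by (intro Hz; rewrite Hz in *; lra).
  field. assumption.
Qed.

Lemma xi_param_normal_limits a b : a < b -> (forall x, a < x < b -> 0 < e * radius (k * x)) ->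
  lim_right (normal f) a (k * e * cos (k * a), k * e * sin (k * a)) /\
  lim_left (normal f) b (k * e * cos (k * b), k * e * sin (k * b)).
Proof.
  intros Hab Hr.
  set (N := fun t => (k * e * cos (k * t), k * e * sin (k * t))).
  trig_form (fun t => k * e * cos (k * t)) Ec HEc. trig_form (fun t => k * e * sin (k * t)) Es HEs.
  assert (HN : forall t, a < t < b -> normal f t = N t) by (intros; now apply xi_param_normal, Hr).
  split; [apply (lim_right_of_continuous _ N a b) | apply (lim_left_of_continuous _ N a b)];
    try assumption; [apply (continuous_trig _ _ HEc) | apply (continuous_trig _ _ HEs)
                    | apply (continuous_trig _ _ HEc) | apply (continuous_trig _ _ HEs)].
Qed.

Lemma xi_param_weak_immersion a b : a < b -> (forall x, a < x < b -> 0 < e * radius (k * x)) ->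
  weak_immersion_arc (f, a, b).
Proof.
  intros Hab Hr. unfold weak_immersion_arc, afun, alo, ahi; simpl.
  assert (Hcx : forall t, continuity_pt (fun s => fst (f s)) t)
    by (intro; apply derivable_continuous_pt; eexists; apply xi_param_deriv_x).
  assert (Hcy : forall t, continuity_pt (fun s => snd (f s)) t)
    by (intro; apply derivable_continuous_pt; eexists; apply xi_param_deriv_y).
  trig_form (fun t => CHx (cos (k * t)) (sin (k * t))) Ex HEx.
  trig_form (fun t => CHy (cos (k * t)) (sin (k * t))) Ey HEy.
  destruct (xi_param_normal_limits a b Hab Hr) as [Hl Hr'].
  repeat split.
  - exact Hab.
  - now apply continuous_on_closed_of_continuous.
  - apply (smooth_trig _ Ex). intro t. now rewrite <- HEx, f_param, xi_formula.
  - apply (smooth_trig _ Ey). intro t. now rewrite <- HEy, f_param, xi_formula.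
  - intros t Ht Hzero. pose proof (xi_param_speed2 t) as Hs. rewrite Hzero in Hs.
    unfold dot in Hs; simpl in Hs. pose proof (Hr t Ht). nra.
  - eexists. exact Hl.
  - eexists. exact Hr'.
Qed.

End XiParametrisation.

(** ** Enclosed areas

    Along xi, the area density (x y' - y x')/2 is radius * gamma / 2 (because
    <xi(t), (cos t, sin t)> = gamma(t)).  It has the explicit primitive
    - (85/256 t + 105/256 sin 4t + 135/2048 sin 8t), written below as a
    polynomial in cos t and sin t, so every arc area is computed by the
    fundamental theorem of calculus. *)

Definition area_density (g : R -> pt) (t : R) : R :=
  (fst (g t) * snd (dvec g t) - snd (g t) * fst (dvec g t)) / 2.

Definition area_primitive (t : R) : R :=
  let c := cos t in let s := sin t in
  - (85/256 * t + 105/256 * (4 * c * s * (c^2 - s^2)) * (c^2 + s^2) ^ 2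
     + 135/2048 * (8 * c * s * (c^2 - s^2) * ((c^2 - s^2) ^ 2 - 4 * c^2 * s^2))).

Lemma area_primitive_deriv t : derivable_pt_lim area_primitive t (radius t * gam t / 2).
Proof.
  trig_form (fun t => - (105/256 * (4 * cos t * sin t * (cos t ^ 2 - sin t ^ 2))
       * (cos t ^ 2 + sin t ^ 2) ^ 2 + 135/2048 * (8 * cos t * sin t * (cos t ^ 2 - sin t ^ 2)
       * ((cos t ^ 2 - sin t ^ 2) ^ 2 - 4 * cos t ^ 2 * sin t ^ 2)))) E HE.
  replace area_primitive with (fun t => - (85/256) * t + teval E t)
    by (extensionality x; rewrite <- HE; unfold area_primitive; ring).
  replace (radius t * gam t / 2) with (- (85/256) + teval (tderiv E) t).
  - apply derivable_pt_lim_plus; [apply derivable_pt_lim_linear | apply tderiv_correct].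
  - subst E. simpl. unfold radius, gam. pose proof (cos2_sin2 t) as Hcs.
    set (c := cos t) in *. set (s := sin t) in *.
    (* both sides are compared after homogenisation with c^2 + s^2 = 1 *)
    replace (- (85/256)) with (- (85/256) * (c^2 + s^2) ^ 4) by (rewrite Hcs; ring).
    replace (45 * c ^ 2 * s ^ 2 - 5) with (45 * c ^ 2 * s ^ 2 - 5 * (c^2 + s^2) ^ 2)
      by (rewrite Hcs; ring).
    apply (eq_by_unit_factor (c^2 + s^2)); [exact Hcs | field].
Qed.

Lemma area_primitive_odd t : area_primitive (- t) = - area_primitive t.
Proof. unfold area_primitive. rewrite cos_neg, sin_neg. field. Qed.

Section XiArcArea.

Variables (f : R -> pt) (k : R).
Hypothesis f_param : forall t, f t = xi (k * t).

Lemma xi_param_area_density t : area_density f t = k * (radius (k * t) * gam (k * t) / 2).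
Proof.
  unfold area_density. rewrite (xi_param_dvec f k f_param t), f_param, xi_formula. simpl.
  unfold gam. pose proof (cos2_sin2 (k * t)) as Hcs.
  set (c := cos (k * t)) in *. set (s := sin (k * t)) in *.
  transitivity (k * radius (k * t) * ((c^2 + s^2) * (c^6 + s^6)) / 2);
    [unfold CHx, CHy; field | rewrite Hcs; field].
Qed.

Lemma xi_param_area_primitive t :
  derivable_pt_lim (fun t => area_primitive (k * t)) t (area_density f t).
Proof.
  rewrite xi_param_area_density, Rmult_comm.
  apply (derivable_pt_lim_comp (fun t => k * t) area_primitive);
    [apply derivable_pt_lim_linear | apply area_primitive_deriv].
Qed.

Lemma xi_param_area_density_continuous : continuity (area_density f).
Proof.
  intro t. apply derivable_continuous_pt.
  replace (area_density f) with (fun t => k * (radius (k * t) * gam (k * t) / 2))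
    by (extensionality x; now rewrite xi_param_area_density).
  trig_form (fun t => k * ((45 * cos (k * t) ^ 2 * sin (k * t) ^ 2 - 5)
                           * (cos (k * t) ^ 6 + sin (k * t) ^ 6) / 2)) E HE.
  eexists. apply (derivable_trig _ _ HE).
Qed.

Lemma xi_param_area a b : a <= b ->
  arc_area (f, a, b) (area_primitive (k * b) - area_primitive (k * a)).
Proof.
  intro Hab. unfold arc_area, afun, alo, ahi; simpl.
  assert (pr : Riemann_integrable (area_density f) a b)
    by (apply continuity_implies_RiemannInt; [exact Hab | intros; apply xi_param_area_density_continuous]).
  exists pr.
  exact (RiemannInt_primitive (fun t => area_primitive (k * t)) _ a b pr
           xi_param_area_primitive xi_param_area_density_continuous).
Qed.

Lemma xi_param_area_pos a b : a < b -> (forall x, a < x < b -> 0 < k * radius (k * x)) ->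
  area_primitive (k * a) < area_primitive (k * b).
Proof.
  intros Hab Hr.
  set (F := fun t => area_primitive (k * t)).
  assert (pr : derivable F) by (intro t; eexists; apply xi_param_area_primitive).
  apply (derive_increasing_interv a b F pr Hab); try lra.
  intros t Ht. rewrite (derive_pt_eq_0 F t _ (pr t) (xi_param_area_primitive t)).
  rewrite xi_param_area_density. pose proof (gam_pos (k * t)). pose proof (Hr t Ht).
  assert (0 < k * radius (k * t) * gam (k * t)) by (apply Rmult_lt_0_compat; assumption).
  lra.
Qed.

End XiArcArea.

(** ** Closed CAMC curves made of xi-arcs *)

Record xi_arc (c : arc) (k e : R) : Prop := {
  xi_arc_dir : k * k = 1;
  xi_arc_side : e * e = 1;
  xi_arc_param : forall t, afun c t = xi (k * t);
  xi_arc_nondeg : alo c < ahi c;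
  xi_arc_radius : forall t, alo c < t < ahi c -> 0 < e * radius (k * t) }.

Lemma fwd_xi_arc a b e : e * e = 1 -> a < b ->
  (forall x, a < x < b -> 0 < e * radius x) -> xi_arc (fwd a b) 1 e.
Proof.
  intros He Hab Hr. constructor; unfold afun, alo, ahi; simpl; try lra.
  - intro. now rewrite Rmult_1_l.
  - intros t Ht. rewrite Rmult_1_l. now apply Hr.
Qed.

Lemma bwd_xi_arc a b e : e * e = 1 -> a < b ->
  (forall x, a < x < b -> 0 < e * radius x) -> xi_arc (bwd a b) (-1) e.
Proof.
  intros He Hab Hr. constructor; unfold afun, alo, ahi; simpl; try lra.
  - intro. f_equal. ring.
  - intros t Ht. apply Hr. lra.
Qed.

Section XiArc.

Variables (c : arc) (k e : R).
Hypothesis Hc : xi_arc c k e.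

Lemma xi_arc_weak_immersion : weak_immersion_arc c.
Proof.
  destruct Hc as [Hk He Hf Hab Hr]. destruct c as [[f a] b]. unfold afun, alo, ahi in *; simpl in *.
  exact (xi_param_weak_immersion f k Hk Hf e He a b Hab Hr).
Qed.

Lemma xi_arc_CH_start n : lim_right (normal (afun c)) (alo c) n ->
  CH gamma6 n = pscal (k * e) (afun c (alo c)).
Proof.
  destruct Hc as [Hk He Hf Hab Hr]. intro Hn.
  destruct (xi_param_normal_limits (afun c) k Hk Hf e He (alo c) (ahi c) Hab Hr) as [Hl _].
  rewrite (lim_right_unique _ _ _ _ Hn Hl), CH_signed_unit, Hf by exact (sign_mult k e Hk He).
  reflexivity.
Qed.

Lemma xi_arc_CH_end n : lim_left (normal (afun c)) (ahi c) n ->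
  CH gamma6 n = pscal (k * e) (afun c (ahi c)).
Proof.
  destruct Hc as [Hk He Hf Hab Hr]. intro Hn.
  destruct (xi_param_normal_limits (afun c) k Hk Hf e He (alo c) (ahi c) Hab Hr) as [_ Hl].
  rewrite (lim_left_unique _ _ _ _ Hn Hl), CH_signed_unit, Hf by exact (sign_mult k e Hk He).
  reflexivity.
Qed.

Lemma xi_arc_aniso_curv t : alo c < t < ahi c -> aniso_curv gamma6 (afun c) t = - (k * e).
Proof.
  destruct Hc as [Hk He Hf Hab Hr].
  exact (xi_param_aniso_curv (afun c) k Hk Hf e He (alo c) (ahi c) t Hr).
Qed.

End XiArc.

(* An arc traversed so that it turns towards its normal (e = k) has positive area. *)
Lemma xi_arc_area_pos c k : xi_arc c k k -> exists A, arc_area c A /\ 0 < A.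
Proof.
  intros [_ _ Hf Hab Hr]. destruct c as [[f a] b]. unfold afun, alo, ahi in *; simpl in *.
  eexists. split; [apply (xi_param_area f k Hf a b); lra|].
  enough (area_primitive (k * a) < area_primitive (k * b)) by lra.
  exact (xi_param_area_pos f k Hf a b Hab Hr).
Qed.

Lemma positively_oriented_of_pos_areas (C : list arc) : C <> [] ->
  (forall c, In c C -> exists A, arc_area c A /\ 0 < A) -> positively_oriented C.
Proof.
  induction C as [|c C IH]; intros Hne H; [congruence|].
  destruct (H c (or_introl eq_refl)) as [A [HA HA0]].
  destruct C as [|c' C'].
  - exists [A]. split; [now repeat constructor | simpl; lra].
  - destruct IH as [As [H1 H2]]; [discriminate | intros; apply H; now right |].
    exists (A :: As). split; [now constructor | simpl in *; lra].
Qed.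

Definition arcs_join (C : list arc) : Prop :=
  forall i, (i < length C)%nat ->
    afun (nth i C dummy_arc) (ahi (nth i C dummy_arc)) =
    afun (nth (next_index C i) C dummy_arc) (alo (nth (next_index C i) C dummy_arc)).

(* A cyclic chain of xi-arcs, each turning towards its normal, is a positively
   oriented closed CAMC curve with anisotropic curvature -1: its Cahn--Hoffman
   field is the position vector itself, hence continuous across the junctions. *)
Lemma closed_CAMC_of_xi_arcs (C : list arc) : C <> [] ->
  (forall c, In c C -> exists k, xi_arc c k k) -> arcs_join C ->
  closed_pw_curve C /\ positively_oriented C /\ CAMC_with gamma6 C (-1).
Proof.
  intros Hne Harcs Hjoin.
  assert (Hnext : forall i, (next_index C i < length C)%nat).
  { intro i. apply Nat.mod_upper_bound. destruct C; [congruence | simpl; lia]. }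
  repeat split.
  - exact Hne.
  - apply Forall_forall. intros c Hin. destruct (Harcs c Hin) as [k Hk].
    exact (xi_arc_weak_immersion c k k Hk).
  - exact Hjoin.
  - apply positively_oriented_of_pos_areas; [exact Hne|].
    intros c Hin. destruct (Harcs c Hin) as [k Hk]. exact (xi_arc_area_pos c k Hk).
  - intros c Hin t Ht. destruct (Harcs c Hin) as [k Hk].
    rewrite (xi_arc_aniso_curv c k k Hk t Ht), (xi_arc_dir _ _ _ Hk). reflexivity.
  - intros i Hi n1 n2 H1 H2.
    destruct (Harcs _ (nth_In C dummy_arc Hi)) as [k Hk].
    destruct (Harcs _ (nth_In C dummy_arc (Hnext i))) as [k' Hk'].
    rewrite (xi_arc_CH_end _ k k Hk n1 H1), (xi_arc_CH_start _ k' k' Hk' n2 H2),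
      (xi_arc_dir _ _ _ Hk), (xi_arc_dir _ _ _ Hk'), (Hjoin i Hi).
    reflexivity.
Qed.

Lemma radius_neg_quarter n t : - theta1 < t - INR n * (PI / 2) < theta1 -> radius t < 0.
Proof.
  intro H. replace t with ((t - INR n * (PI / 2)) + INR n * (PI / 2)) by ring.
  rewrite radius_quarters. now apply radius_neg.
Qed.

Lemma radius_pos_quarter n t : theta1 < t - INR n * (PI / 2) < PI / 2 - theta1 -> 0 < radius t.
Proof.
  intro H. replace t with ((t - INR n * (PI / 2)) + INR n * (PI / 2)) by ring.
  rewrite radius_quarters. now apply radius_pos.
Qed.

Ltac angle_arith :=
  unfold theta2, theta3, theta4, theta5, theta6, theta7, theta8 in *;
  pose proof angle_bounds; pose proof rho2_eq; pose proof PI_RGT_0; simpl INR; lra.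

Ltac fwd_arc n := exists 1;
  apply fwd_xi_arc; [ring | angle_arith | intros x Hx;
    assert (0 < radius x) by (apply (radius_pos_quarter n); angle_arith); lra].
Ltac bwd_arc n := exists (-1);
  apply bwd_xi_arc; [ring | angle_arith | intros x Hx;
    assert (radius x < 0) by (apply (radius_neg_quarter n); angle_arith); lra].

Ltac check_joins :=
  intros i Hi; simpl in Hi; unfold next_index;
  repeat (destruct i as [|i]; [simpl; unfold afun, alo, ahi, bwd, fwd; simpl;
    rewrite ?Ropp_involutive, ?xi_theta1, ?xi_theta2, ?xi_theta3, ?xi_theta4, ?xi_theta5,
      ?xi_theta6, ?xi_theta7, ?xi_theta8, ?xi_theta8_2PI, ?xi_rho1, ?xi_rho2, ?xi_rho1_1,
      ?xi_rho1_2, ?xi_rho1_3, ?xi_rho2_1, ?xi_rho2_2, ?xi_rho2_3, ?xi_opp_rho1;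
    reflexivity |]); lia.

Lemma Cgamma1_CAMC :
  closed_pw_curve Cgamma1 /\ positively_oriented Cgamma1 /\ CAMC_with gamma6 Cgamma1 (-1).
Proof.
  apply closed_CAMC_of_xi_arcs; [discriminate | | check_joins].
  intros c Hc. repeat destruct Hc as [<- | Hc]; try contradiction.
  - bwd_arc 0%nat.
  - bwd_arc 1%nat.
  - bwd_arc 2%nat.
  - bwd_arc 3%nat.
Qed.

Lemma Cgamma2_CAMC :
  closed_pw_curve Cgamma2 /\ positively_oriented Cgamma2 /\ CAMC_with gamma6 Cgamma2 (-1).
Proof.
  apply closed_CAMC_of_xi_arcs; [discriminate | | check_joins].
  intros c Hc. repeat destruct Hc as [<- | Hc]; try contradiction.
  - fwd_arc 0%nat.
  - fwd_arc 2%nat.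
Qed.

Lemma Cgamma3_CAMC :
  closed_pw_curve Cgamma3 /\ positively_oriented Cgamma3 /\ CAMC_with gamma6 Cgamma3 (-1).
Proof.
  apply closed_CAMC_of_xi_arcs; [discriminate | | check_joins].
  intros c Hc. repeat destruct Hc as [<- | Hc]; try contradiction.
  - bwd_arc 0%nat.
  - fwd_arc 1%nat.
  - fwd_arc 2%nat.
Qed.

Lemma Cgamma4_CAMC :
  closed_pw_curve Cgamma4 /\ positively_oriented Cgamma4 /\ CAMC_with gamma6 Cgamma4 (-1).
Proof.
  apply closed_CAMC_of_xi_arcs; [discriminate | | check_joins].
  intros c Hc. repeat destruct Hc as [<- | Hc]; try contradiction.
  - fwd_arc 0%nat.
  - fwd_arc 3%nat.
  - fwd_arc 1%nat.
  - fwd_arc 0%nat.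
  - fwd_arc 2%nat.
  - fwd_arc 1%nat.
  - fwd_arc 3%nat.
  - fwd_arc 2%nat.
Qed.

(** Its middle arc xi([theta_8, theta_1]) has negative radius of curvature and
    its two outer arcs positive radius, so traversed in one direction the
    anisotropic curvature is -1 on the middle arc and +1 on the outer ones. *)

Lemma Cgamma5_outer_right : xi_arc (bwd theta1 rho1) (-1) 1.
Proof.
  apply bwd_xi_arc; [ring | angle_arith |].
  intros x Hx. assert (0 < radius x) by (apply radius_pos; angle_arith). lra.
Qed.

Lemma Cgamma5_middle : xi_arc (bwd theta8 theta1) (-1) (-1).
Proof.
  apply bwd_xi_arc; [ring | angle_arith |].
  intros x Hx. assert (radius x < 0) by (apply radius_neg; angle_arith). lra.
Qed.

Lemma Cgamma5_outer_left : xi_arc (bwd (- rho1) theta8) (-1) 1.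
Proof.
  apply bwd_xi_arc; [ring | angle_arith |].
  intros x Hx. rewrite <- radius_opp.
  assert (0 < radius (- x)) by (apply radius_pos; angle_arith). lra.
Qed.

Lemma Cgamma5_closed : closed_pw_curve Cgamma5.
Proof.
  split; [discriminate | split; [|check_joins]].
  repeat apply Forall_cons; [..| apply Forall_nil]; eapply xi_arc_weak_immersion;
    [exact Cgamma5_outer_right | exact Cgamma5_middle | exact Cgamma5_outer_left].
Qed.

Lemma bwd_area a b : a <= b -> arc_area (bwd a b) (area_primitive a - area_primitive b).
Proof.
  intro Hab. replace (area_primitive a - area_primitive b) with
    (area_primitive (-1 * - a) - area_primitive (-1 * - b)) by (f_equal; f_equal; ring).
  apply (xi_param_area (fun t => xi (- t)) (-1)); [intro; f_equal; ring | lra].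
Qed.

(* With c = cos rho_1 > s = sin rho_1 > 0, area_primitive rho_1 equals
   - (85/256 rho_1 + c s (c^2 - s^2) B) where
   B = 105/64 (c^2 + s^2)^2 + 135/256 ((c^2 - s^2)^2 - 4 c^2 s^2) > 0. *)
Lemma area_primitive_rho1 : area_primitive rho1 < 0.
Proof.
  unfold area_primitive. rewrite cos_rho1, sin_rho1.
  pose proof c_rho1_sq. pose proof s_rho1_sq. pose proof cs_rho1_pos. pose proof sqrt5_bounds.
  pose proof angle_bounds.
  set (c := c_rho1) in *. set (s := s_rho1) in *.
  set (B := 105/64 * (c ^ 2 + s ^ 2) ^ 2 + 135/256 * ((c ^ 2 - s ^ 2) ^ 2 - 4 * (c ^ 2 * s ^ 2))).
  assert (Hfac : 0 < c * s * (c ^ 2 - s ^ 2)) by (apply Rmult_lt_0_compat; nra).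
  assert (HB : 0 < B) by (unfold B; nra).
  pose proof (Rmult_lt_0_compat _ _ Hfac HB).
  replace (- (85/256 * rho1 + 105/256 * (4 * c * s * (c ^ 2 - s ^ 2)) * (c ^ 2 + s ^ 2) ^ 2
     + 135/2048 * (8 * c * s * (c ^ 2 - s ^ 2) * ((c ^ 2 - s ^ 2) ^ 2 - 4 * c ^ 2 * s ^ 2))))
    with (- (85/256 * rho1 + c * s * (c ^ 2 - s ^ 2) * B)) by (unfold B; field).
  lra.
Qed.

Lemma Cgamma5_positively_oriented : positively_oriented Cgamma5.
Proof.
  pose proof angle_bounds.
  exists [area_primitive theta1 - area_primitive rho1; area_primitive theta8 - area_primitive theta1;
          area_primitive (- rho1) - area_primitive theta8].
  split.
  - repeat constructor; apply bwd_area; unfold theta8; lra.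
  - simpl. unfold theta8. rewrite !area_primitive_odd. pose proof area_primitive_rho1. lra.
Qed.

Lemma Cgamma5_curv_middle th : theta8 < th < theta1 ->
  aniso_curv gamma6 (fun t => xi (- t)) (- th) = -1.
Proof.
  intro H. rewrite (xi_arc_aniso_curv _ _ _ Cgamma5_middle); [ring|].
  unfold alo, ahi, bwd; simpl. lra.
Qed.

Lemma Cgamma5_curv_outer th : (- rho1 < th < theta8 \/ theta1 < th < rho1) ->
  aniso_curv gamma6 (fun t => xi (- t)) (- th) = 1.
Proof.
  intros [H | H].
  - rewrite (xi_arc_aniso_curv _ _ _ Cgamma5_outer_left); [ring|].
    unfold alo, ahi, bwd; simpl. lra.
  - rewrite (xi_arc_aniso_curv _ _ _ Cgamma5_outer_right); [ring|].
    unfold alo, ahi, bwd; simpl. lra.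
Qed.

Lemma Cgamma5_not_CAMC : ~ CAMC gamma6 Cgamma5.
Proof.
  intros [Lam [Hcurv _]]. destruct angle_bounds as [H0 [H1 _]].
  pose proof (Hcurv (bwd theta8 theta1) ltac:(simpl; auto) 0) as Hmid.
  pose proof (Hcurv (bwd theta1 rho1) ltac:(simpl; auto) (- ((theta1 + rho1) / 2))) as Hout.
  unfold afun, alo, ahi, bwd in Hmid, Hout; simpl in Hmid, Hout. unfold theta8 in *.
  rewrite <- Ropp_0, Cgamma5_curv_middle in Hmid by (unfold theta8; lra).
  rewrite Cgamma5_curv_outer in Hout by lra.
  specialize (Hmid ltac:(lra)). specialize (Hout ltac:(lra)). lra.
Qed.

Lemma curve_image_fwd a b C th : In (fwd a b) C -> a <= th <= b -> curve_image C (xi th).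
Proof. intros Hin Hth. exists (fwd a b). split; [exact Hin|]. now exists th. Qed.

Lemma curve_image_bwd a b C th : In (bwd a b) C -> a <= th <= b -> curve_image C (xi th).
Proof.
  intros Hin Hth. exists (bwd a b). split; [exact Hin|].
  exists (- th). unfold afun, alo, ahi, bwd; simpl. rewrite Ropp_involutive. split; [lra | reflexivity].
Qed.

Ltac pick_interval := first [ left; unfold Icc; lra | right; pick_interval | unfold Icc; lra ].

Ltac image_of_curve :=
  let c := fresh "c" in let Hin := fresh "Hin" in let t := fresh "t" in let Ht := fresh "Ht" in
  intros [c [Hin [t [Ht ->]]]]; simpl in Hin;
  repeat destruct Hin as [<- | Hin]; try contradiction;
  unfold fwd, bwd, alo, ahi, afun in *; simpl in *;
  first [ exists t; split; [pick_interval | reflexivity]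
        | exists (- t); split; [pick_interval | reflexivity] ].

Ltac curve_of_image :=
  let th := fresh "th" in let Hth := fresh "Hth" in
  intros [th [Hth ->]];
  repeat match goal with H : _ \/ _ |- _ => destruct H as [Hth | Hth] end;
  first [ eapply curve_image_fwd; [| exact Hth]; simpl; tauto
        | eapply curve_image_bwd; [| exact Hth]; simpl; tauto ].

Lemma Cgamma1_image X : curve_image Cgamma1 X <->
  xi_image (fun t => Icc theta2 theta3 t \/ Icc theta4 theta5 t \/
                     Icc theta6 theta7 t \/ Icc theta8 theta1 t) X.
Proof. split; [image_of_curve | curve_of_image]. Qed.

Lemma Cgamma2_image X : curve_image Cgamma2 X <->
  xi_image (fun t => Icc theta1 theta2 t \/ Icc theta5 theta6 t) X.
Proof. split; [image_of_curve | curve_of_image]. Qed.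

Lemma Cgamma3_image X : curve_image Cgamma3 X <->
  xi_image (fun t => Icc theta8 theta1 t \/ Icc theta3 (rho2 + PI / 2) t \/
                     Icc (rho1 + PI) theta6 t) X.
Proof. split; [image_of_curve | curve_of_image]. Qed.

Lemma Cgamma4_image X : curve_image Cgamma4 X <->
  xi_image (fun t => Icc theta1 rho1 t \/ Icc rho2 theta2 t \/
                     Icc theta3 (rho1 + PI / 2) t \/ Icc (rho2 + PI / 2) theta4 t \/
                     Icc theta5 (rho1 + PI) t \/ Icc (rho2 + PI) theta6 t \/
                     Icc theta7 (rho1 + 3 * PI / 2) t \/
                     Icc (rho2 + 3 * PI / 2) (theta8 + 2 * PI) t) X.
Proof. split; [image_of_curve | curve_of_image]. Qed.

Lemma Cgamma5_image X : curve_image Cgamma5 X <-> xi_image (Icc (- rho1) rho1) X.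
Proof.
  pose proof angle_bounds. split.
  - intros [c [Hin [t [Ht ->]]]]. simpl in Hin.
    exists (- t). split; [|repeat destruct Hin as [<- | Hin]; try contradiction; reflexivity].
    repeat destruct Hin as [<- | Hin]; try contradiction;
      unfold bwd, alo, ahi, theta8, Icc in *; simpl in *; lra.
  - intros [th [Hth ->]]. unfold Icc in Hth.
    destruct (Rle_dec th theta8); [|destruct (Rle_dec th theta1)].
    + apply (curve_image_bwd (- rho1) theta8); [simpl; tauto | lra].
    + apply (curve_image_bwd theta8 theta1); [simpl; tauto | lra].
    + apply (curve_image_bwd theta1 rho1); [simpl; tauto | lra].
Qed.

(** ** The Wulff shape

    W = boundary of the body {X | <X, nu> <= gamma(nu) for all unit nu}.
    (1) The arc xi([rho_1, rho_2]) lies in the body: on it xi is convex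
        (radius > 0), so <xi(p), nu> - gamma(nu) is maximal either at an end
        (an explicit quartic inequality) or at the angle of nu (where it is 0).
        By the quarter-turn symmetry the four arcs of (ii) lie in the body, and
        being supported by the line <X, e_t> = gamma(t) they lie on its boundary.
    (2) Conversely a boundary point X is in the (closed) body and touches some
        support line <X, e_p> = gamma(p); minimality of p |-> gamma(p) - <X, e_p>
        forces X = xi(p).  Reducing p modulo pi/2 to [rho_1, rho_1 + pi/2),
        the points xi(p) with p in (rho_2, rho_1 + pi/2) are excluded because a
        suitable support line cuts them off. *)

Definition body : pt -> Prop := Wulff_body gamma6.

Lemma unit_vec_angle t : unit_vec (cos t, sin t).
Proof. unfold unit_vec, dot; simpl. pose proof (cos2_sin2 t). nra. Qed.

Lemma unit_vec_polar a b : unit_vec (a, b) -> exists p, 0 <= p <= 2 * PI /\ a = cos p /\ b = sin p.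
Proof.
  intro Hu. unfold unit_vec, dot in Hu; simpl in Hu.
  assert (Ha : -1 <= a <= 1) by nra.
  pose proof (acos_bound a). pose proof PI_RGT_0.
  assert (Hs : sqrt (1 - a²) = Rabs b) by (rewrite <- sqrt_Rsqr_abs; f_equal; unfold Rsqr; lra).
  destruct (Rle_dec 0 b).
  - exists (acos a). split; [lra|]. rewrite cos_acos, sin_acos, Hs, Rabs_right by lra. now split.
  - exists (2 * PI - acos a). split; [lra|]. split.
    + rewrite cos_minus, cos_2PI, sin_2PI, cos_acos by assumption. ring.
    + rewrite sin_minus, cos_2PI, sin_2PI, sin_acos, Hs, Rabs_left by lra. ring.
Qed.

Lemma xi_support t : dot (xi t) (cos t, sin t) = gamma6 (cos t, sin t).
Proof.
  rewrite xi_formula. unfold dot, gamma6, CHx, CHy; simpl. pose proof (cos2_sin2 t) as Hcs.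
  transitivity ((cos t ^ 2 + sin t ^ 2) * (cos t ^ 6 + sin t ^ 6)); [ring|]. rewrite Hcs. ring.
Qed.

Lemma body_rot X : body X -> body (rot_ccw X).
Proof.
  intros H [a b] Hu. specialize (H (b, - a)). unfold unit_vec, dot, gamma6 in *; simpl in *.
  destruct X as [x y]; simpl in *. specialize (H ltac:(lra)). nra.
Qed.

Lemma body_rot_iter n X : body X <-> body (Nat.iter n rot_ccw X).
Proof.
  induction n as [|n IH]; simpl; [tauto|]. rewrite IH. split; [apply body_rot|].
  intro H. apply body_rot, body_rot, body_rot in H.
  destruct (Nat.iter n rot_ccw X) as [x y]; unfold rot_ccw in H; simpl in H.
  now rewrite !Ropp_involutive in H.
Qed.

Lemma body_conj x y : body (x, y) -> body (x, - y).
Proof.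
  intros H [a b] Hu. specialize (H (a, - b)). unfold unit_vec, dot, gamma6 in *; simpl in *.
  specialize (H ltac:(lra)). nra.
Qed.

Lemma vertex_support a b : a * a + b * b = 1 -> vertex * a <= a ^ 6 + b ^ 6.
Proof.
  intro Hab. rewrite vertex_eq. pose proof sqrt5_bounds. pose proof c_rho1_sq.
  replace (b ^ 6) with ((1 - a * a) ^ 3) by (rewrite <- Hab; ring).
  (* a^6 + (1 - a^2)^3 - vertex a = (a - c)^2 (3 (a + c)^2 + sqrt 5 - 2), c = cos rho_1 *)
  assert (E : a ^ 6 + (1 - a * a) ^ 3 - c_rho1 * (2 * sqrt 5 - 4) * a =
              (a - c_rho1) ^ 2 * (3 * (a + c_rho1) ^ 2 + (sqrt 5 - 2))).
  { assert (Hc : forall n, c_rho1 ^ S (S n) = (1 + sqrt 5) / 6 * c_rho1 ^ n)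
      by (intro n; rewrite <- c_rho1_sq; simpl; ring).
    ring_simplify. rewrite ?Hc. ring_simplify. rewrite ?Hc. ring_simplify.
    field_simplify. rewrite ?sqrt5_pow. field. }
  assert (0 <= (a - c_rho1) ^ 2 * (3 * (a + c_rho1) ^ 2 + (sqrt 5 - 2)))
    by (apply Rmult_le_pos; [apply pow2_ge_0 | pose proof (pow2_ge_0 (a + c_rho1)); lra]).
  lra.
Qed.

Lemma support_at_parallel a b t : a * a + b * b = 1 -> - sin t * a + cos t * b = 0 ->
  dot (xi t) (a, b) <= gamma6 (a, b).
Proof.
  intros Hab Hpar. rewrite xi_formula. unfold dot, gamma6; cbn [fst snd].
  pose proof (cos2_sin2 t) as Hcs. pose proof (gam_pos t) as Hg. unfold gam in Hg.
  set (c := cos t) in *. set (s := sin t) in *.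
  set (p := a * c + b * s).
  assert (Ha : a = p * c) by (transitivity (p * c - s * (- s * a + c * b));
    [transitivity (a * (c^2 + s^2)); [rewrite Hcs; ring | unfold p; ring] | rewrite Hpar; ring]).
  assert (Hb : b = p * s) by (transitivity (p * s + c * (- s * a + c * b));
    [transitivity (b * (c^2 + s^2)); [rewrite Hcs; ring | unfold p; ring] | rewrite Hpar; ring]).
  assert (Hp : p * p = 1) by (clearbody p; rewrite <- Hab, Ha, Hb;
    transitivity (p * p * (c^2 + s^2)); [rewrite Hcs; ring | ring]).
  clearbody p. rewrite Ha, Hb.
  replace (CHx c s * (p * c) + CHy c s * (p * s)) with (p * ((c^2 + s^2) * (c^6 + s^6)))
    by (unfold CHx, CHy; ring).
  replace ((p * c) ^ 6 + (p * s) ^ 6) with ((p * p) ^ 3 * (c^6 + s^6)) by ring.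
  rewrite Hp, Hcs. assert (p <= 1) by nra.
  set (G := c^6 + s^6) in *. nra.
Qed.

Lemma support_deriv a b t :
  derivable_pt_lim (fun p => dot (xi p) (a, b)) t (radius t * (- sin t * a + cos t * b)).
Proof.
  unfold dot; simpl.
  replace (radius t * (- sin t * a + cos t * b)) with
    ((- sin t * radius t) * a + (cos t * radius t) * b) by ring.
  apply (derivable_pt_lim_plus (fun p => fst (xi p) * a) (fun p => snd (xi p) * b));
    apply derivable_pt_lim_scal_right; [apply xi_deriv_x | apply xi_deriv_y].
Qed.

Lemma xi_in_body_base th : rho1 <= th <= rho2 -> body (xi th).
Proof.
  intros Hth [a b] Hu. unfold unit_vec, dot in Hu; simpl in Hu.
  set (g := fun p => dot (xi p) (a, b)).
  assert (Hc : forall t, continuity_pt g t)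
    by (intro t; apply derivable_continuous_pt; eexists; apply support_deriv).
  pose proof angle_bounds. pose proof rho2_eq. pose proof PI_RGT_0.
  destruct (continuity_ab_maj g rho1 rho2 ltac:(lra) (fun c _ => Hc c)) as [M [HM HMin]].
  enough (g M <= gamma6 (a, b)) by (pose proof (HM th Hth); unfold g in *; lra).
  destruct (Req_dec M rho1) as [->|]; [|destruct (Req_dec M rho2) as [->|]].
  - unfold g, dot, gamma6. rewrite xi_rho1. cbn [fst snd].
    pose proof (vertex_support a b Hu). lra.
  - unfold g, dot, gamma6. rewrite xi_rho2. cbn [fst snd].
    pose proof (vertex_support b a ltac:(lra)). lra.
  - (* an interior maximum is a critical point: e_M is parallel to nu *)
    assert (pr : derivable_pt g M) by (eexists; apply support_deriv).
    pose proof (deriv_maximum g rho1 rho2 M pr ltac:(lra) ltac:(lra)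
                  (fun x H1 H2 => HM x ltac:(lra))) as D.
    rewrite (derive_pt_eq_0 _ _ _ pr (support_deriv a b M)) in D.
    assert (0 < radius M) by (apply radius_pos; lra).
    apply (support_at_parallel a b M Hu).
    destruct (Rmult_integral _ _ D); [lra | assumption].
Qed.

(* A point of the body on a support line is a boundary point: pushing it
   outwards leaves the body. *)
Lemma supported_in_boundary X nu : body X -> unit_vec nu -> dot X nu = gamma6 nu ->
  0 < gamma6 nu -> Wulff_shape gamma6 X.
Proof.
  intros HX Hu Hd Hg eps He. split; [exists X; now rewrite pdist_self|].
  destruct X as [x y].
  pose proof (Rabs_pos x). pose proof (Rabs_pos y).
  set (d := eps / (2 * (Rabs x + Rabs y + 1))).
  assert (Hd0 : 0 < d) by (unfold d; apply Rdiv_lt_0_compat; lra).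
  exists ((1 + d) * x, (1 + d) * y). split.
  - intro HB. specialize (HB nu Hu). unfold dot in *; simpl in *. nra.
  - eapply Rle_lt_trans; [apply pdist_le_coords|]. simpl.
    replace (x - (1 + d) * x) with (- d * x) by ring. replace (y - (1 + d) * y) with (- d * y) by ring.
    rewrite !Rabs_mult, Rabs_Ropp, (Rabs_right d) by lra.
    assert (d * (Rabs x + Rabs y + 1) = eps / 2) by (unfold d; field; lra).
    nra.
Qed.

Lemma xi_in_boundary th : body (xi th) -> Wulff_shape gamma6 (xi th).
Proof.
  intro HB. apply (supported_in_boundary _ (cos th, sin th)); [exact HB | apply unit_vec_angle | apply xi_support |].
  apply gam_pos.
Qed.

Lemma boundary_in_body X : Wulff_shape gamma6 X -> body X.
Proof.
  intros HW nu Hu. destruct (Rle_dec (dot X nu) (gamma6 nu)) as [|Hgt]; [assumption|].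
  exfalso. destruct (HW (dot X nu - gamma6 nu) ltac:(lra)) as [[Y [HY HXY]] _].
  specialize (HY nu Hu). pose proof (dot_diff_le_pdist X Y nu Hu). lra.
Qed.

Definition support_gap (X : pt) (p : R) : R := gamma6 (cos p, sin p) - dot X (cos p, sin p).

Lemma support_gap_deriv x y p : derivable_pt_lim (support_gap (x, y)) p
  (6 * sin p ^ 5 * cos p - 6 * cos p ^ 5 * sin p + x * sin p - y * cos p).
Proof.
  trig_form (fun p => cos p ^ 6 + sin p ^ 6 - (x * cos p + y * sin p)) E HE.
  replace (support_gap (x, y)) with (fun p => cos p ^ 6 + sin p ^ 6 - (x * cos p + y * sin p))
    by reflexivity.
  replace (6 * sin p ^ 5 * cos p - 6 * cos p ^ 5 * sin p + x * sin p - y * cos p)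
    with (teval (tderiv E) p) by (subst E; simpl; ring).
  apply (derivable_trig _ _ HE).
Qed.

Lemma support_gap_continuous X p : continuity_pt (support_gap X) p.
Proof.
  destruct X as [x y]. apply derivable_continuous_pt. eexists. apply support_gap_deriv.
Qed.

(* A boundary point lies on a support line; otherwise the gap
   min_p support_gap X p > 0 would leave a neighbourhood of X in the body. *)
Lemma boundary_supported X : Wulff_shape gamma6 X ->
  exists p, dot X (cos p, sin p) = gamma6 (cos p, sin p).
Proof.
  intro HW. pose proof (boundary_in_body X HW) as HB.
  apply NNPP. intro Hn.
  assert (Hlt : forall p, 0 < support_gap X p).
  { intro p. unfold support_gap. destruct (HB _ (unit_vec_angle p)); [lra|].
    exfalso. apply Hn. now exists p. }
  pose proof PI_RGT_0.
  destruct (continuity_ab_min (support_gap X) 0 (2 * PI) ltac:(lra)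
              (fun c _ => support_gap_continuous X c)) as [pm [Hpm _]].
  destruct (HW (support_gap X pm) (Hlt pm)) as [_ [Y [HY HXY]]].
  apply HY. intros [a b] Hu. destruct (unit_vec_polar a b Hu) as [p [Hp [-> ->]]].
  pose proof (Hpm p Hp). pose proof (dot_diff_le_pdist Y X _ Hu).
  rewrite pdist_sym in HXY. unfold support_gap in *. lra.
Qed.

(* A body point on the support line in direction e_p is xi(p): p minimises
   support_gap X, and the vanishing derivative gives the tangential component. *)
Lemma supported_is_xi X p : body X -> dot X (cos p, sin p) = gamma6 (cos p, sin p) -> X = xi p.
Proof.
  intros HB Ht. destruct X as [x y].
  assert (Hmin : forall q, support_gap (x, y) p <= support_gap (x, y) q).
  { intro q. specialize (HB _ (unit_vec_angle q)). unfold support_gap. lra. }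
  assert (pr : derivable_pt (support_gap (x, y)) p) by (eexists; apply support_gap_deriv).
  pose proof (deriv_minimum _ (p - 1) (p + 1) p pr ltac:(lra) ltac:(lra) (fun q _ _ => Hmin q)) as D.
  rewrite (derive_pt_eq_0 _ _ _ pr (support_gap_deriv x y p)) in D.
  unfold dot, gamma6 in Ht; cbn [fst snd] in Ht. rewrite xi_formula.
  pose proof (cos2_sin2 p) as Hcs. set (c := cos p) in *. set (s := sin p) in *.
  assert (Htan : x * s - y * c = 6 * c ^ 5 * s - 6 * s ^ 5 * c) by lra.
  f_equal.
  - transitivity (c * (x * c + y * s) + s * (x * s - y * c));
      [transitivity (x * (c^2 + s^2)); [rewrite Hcs | ]; ring|].
    rewrite Ht, Htan. unfold CHx. ring.
  - transitivity (s * (x * c + y * s) - c * (x * s - y * c));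
      [transitivity (y * (c^2 + s^2)); [rewrite Hcs | ]; ring|].
    rewrite Ht, Htan. unfold CHy. ring.
Qed.

(* For 0 < p < rho_1 the support line of direction (cos p, - sin p) cuts off xi(p). *)
Lemma xi_not_in_body_pos p : 0 < p < rho1 -> ~ body (xi p).
Proof.
  intros Hp HB. pose proof angle_bounds. pose proof PI_RGT_0.
  specialize (HB (cos p, - sin p)).
  assert (Hu : unit_vec (cos p, - sin p))
    by (unfold unit_vec, dot; cbn [fst snd]; pose proof (cos2_sin2 p); nra).
  specialize (HB Hu). rewrite xi_formula in HB. unfold dot, gamma6 in HB; cbn [fst snd] in HB.
  assert (Hc : c_rho1 < cos p) by (rewrite <- cos_rho1; apply cos_decreasing_1; lra).
  assert (Hs : 0 < sin p) by (apply sin_gt_0; lra).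
  pose proof (cos2_sin2 p) as Hcs. pose proof c_rho1_sq. pose proof cs_rho1_pos.
  pose proof sqrt5_bounds. pose proof sqrt5_sq.
  set (c := cos p) in *. set (s := sin p) in *.
  (* the second factor of CHy is negative beyond the vertex *)
  assert (HQ : -5 * c ^ 6 + 6 * c ^ 2 * s ^ 4 + s ^ 6 < 0).
  { replace (-5 * c ^ 6 + 6 * c ^ 2 * s ^ 4 + s ^ 6) with (-9 * (c^2) ^ 2 + 3 * c^2 + 1)
      by (replace (s ^ 4) with ((s^2) ^ 2) by ring; replace (s ^ 6) with ((s^2) ^ 3) by ring;
          replace (s ^ 2) with (1 - c ^ 2) by lra; ring).
    assert (c ^ 2 > (1 + sqrt 5) / 6) by nra. set (w := c ^ 2) in *. nra. }
  assert (E : CHx c s * c + CHy c s * - s =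
              (c ^ 6 + (- s) ^ 6) - 2 * s ^ 2 * (-5 * c ^ 6 + 6 * c ^ 2 * s ^ 4 + s ^ 6)).
  { transitivity ((c^2 + s^2) * (c^6 + s^6) - 2 * s^2 * (-5 * c^6 + 6 * c^2 * s^4 + s^6));
      [unfold CHx, CHy; ring | rewrite Hcs; ring]. }
  rewrite E in HB. assert (0 < s ^ 2) by nra. nra.
Qed.

(* xi(0) = (1, 0) is cut off by the diagonal support line. *)
Lemma xi_not_in_body_0 : ~ body (xi 0).
Proof.
  intro HB. rewrite xi_formula, cos_0, sin_0 in HB. unfold CHx, CHy in HB.
  set (h := sqrt 2 / 2). pose proof sqrt2_bounds. pose proof (sqrt_sqrt 2 ltac:(lra)).
  assert (Hh : h * h = 1 / 2) by (unfold h; field_simplify; lra).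
  specialize (HB (h, h)). unfold unit_vec, dot, gamma6 in HB; cbn [fst snd] in HB.
  specialize (HB ltac:(lra)).
  replace (h ^ 6 + h ^ 6) with (2 * (h * h) ^ 3) in HB by ring. rewrite Hh in HB.
  assert (0.7 < h) by (unfold h; lra). nra.
Qed.

Lemma xi_not_in_body_axis p : - rho1 < p < rho1 -> ~ body (xi p).
Proof.
  intros Hp HB. destruct (Rtotal_order p 0) as [H | [-> | H]].
  - apply (xi_not_in_body_pos (- p)); [lra|]. rewrite xi_opp.
    destruct (xi p) as [x y]. now apply body_conj.
  - exact (xi_not_in_body_0 HB).
  - exact (xi_not_in_body_pos p ltac:(lra) HB).
Qed.

Lemma angle_reduction a p : exists psi n q,
  a <= psi < a + PI / 2 /\ (n < 4)%nat /\ p = psi + INR n * (PI / 2) + IZR q * (2 * PI).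
Proof.
  pose proof PI_RGT_0.
  set (r := (p - a) / (PI / 2)). set (k := (up r - 1)%Z).
  destruct (archimed r) as [Hr1 Hr2].
  assert (Hk : IZR k <= r < IZR k + 1) by (unfold k; rewrite minus_IZR; simpl; lra).
  assert (Hr : p = a + r * (PI / 2)) by (unfold r; field; lra).
  pose proof (Z.div_mod k 4 ltac:(lia)) as Hdm. pose proof (Z.mod_pos_bound k 4 ltac:(lia)).
  exists (p - IZR k * (PI / 2)), (Z.to_nat (k mod 4)), (k / 4)%Z. repeat split.
  - rewrite Hr. nra.
  - rewrite Hr. nra.
  - lia.
  - rewrite INR_IZR_INZ, Z2Nat.id by lia.
    assert (Hk4 : IZR k = 4 * IZR (k / 4) + IZR (k mod 4))
      by (rewrite Hdm at 1; rewrite plus_IZR, mult_IZR; reflexivity).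
    rewrite Hk4. field.
Qed.

Definition wulff_angles (t : R) : Prop :=
  Icc rho1 rho2 t \/ Icc (rho1 + PI / 2) (rho2 + PI / 2) t \/
  Icc (rho1 + PI) (rho2 + PI) t \/ Icc (rho1 + 3 * PI / 2) (rho2 + 3 * PI / 2) t.

Lemma wulff_angles_quarters t : wulff_angles t <->
  exists n, (n < 4)%nat /\ rho1 <= t - INR n * (PI / 2) <= rho2.
Proof.
  unfold wulff_angles, Icc. split.
  - intros [H | [H | [H | H]]]; [exists 0%nat | exists 1%nat | exists 2%nat | exists 3%nat];
      (split; [lia | simpl; lra]).
  - intros [n [Hn H]]. do 4 (destruct n as [|n]; [simpl in H; lra|]). lia.
Qed.

Lemma Wulff_shape_xi_image X : Wulff_shape gamma6 X <-> xi_image wulff_angles X.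
Proof.
  split.
  - intro HW. destruct (boundary_supported X HW) as [p Hp].
    pose proof (boundary_in_body X HW) as HB.
    rewrite (supported_is_xi X p HB Hp) in HB |- *.
    destruct (angle_reduction rho1 p) as [psi [n [q [Hpsi [Hn ->]]]]].
    rewrite xi_Zperiod, xi_quarters in HB |- *. apply body_rot_iter in HB.
    assert (Hpsi' : psi <= rho2).
    { destruct (Rle_dec psi rho2) as [|Hgt]; [assumption|]. exfalso.
      apply (xi_not_in_body_axis (psi - PI / 2)); [pose proof rho2_eq; lra|].
      replace psi with ((psi - PI / 2) + INR 1 * (PI / 2)) in HB by (simpl; ring).
      now rewrite xi_quarters, <- body_rot_iter in HB. }
    exists (psi + INR n * (PI / 2)). rewrite xi_quarters. split; [|reflexivity].
    apply wulff_angles_quarters. exists n. split; [exact Hn | lra].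
  - intros [th [Hth ->]]. apply xi_in_boundary.
    apply wulff_angles_quarters in Hth. destruct Hth as [n [_ Hn]].
    replace th with ((th - INR n * (PI / 2)) + INR n * (PI / 2)) by ring.
    rewrite xi_quarters. apply body_rot_iter, xi_in_body_base. exact Hn.
Qed.

Theorem proposition3p5 :
  (* (i) explicit formula (the second component has the coefficient 6 c^2 s^4) *)
  (forall th : R,
     xi th =
     (cos th * (cos th ^ 6 + 6 * cos th ^ 4 * sin th ^ 2 - 5 * sin th ^ 6),
      sin th * (- 5 * cos th ^ 6 + 6 * cos th ^ 2 * sin th ^ 4 + sin th ^ 6))) /\
  (* (ii) Wulff shape *)
  (forall X : pt,
     Wulff_shape gamma6 X <->
     xi_image (fun t => Icc rho1 rho2 t \/ Icc (rho1 + PI / 2) (rho2 + PI / 2) t \/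
                        Icc (rho1 + PI) (rho2 + PI) t \/
                        Icc (rho1 + 3 * PI / 2) (rho2 + 3 * PI / 2) t) X) /\
  (* (iii) the four CAMC curves, curvature -1 w.r.t. the outward normal *)
  (closed_pw_curve Cgamma1 /\ positively_oriented Cgamma1 /\ CAMC_with gamma6 Cgamma1 (-1) /\
   forall X, curve_image Cgamma1 X <->
     xi_image (fun t => Icc theta2 theta3 t \/ Icc theta4 theta5 t \/
                        Icc theta6 theta7 t \/ Icc theta8 theta1 t) X) /\
  (closed_pw_curve Cgamma2 /\ positively_oriented Cgamma2 /\ CAMC_with gamma6 Cgamma2 (-1) /\
   forall X, curve_image Cgamma2 X <->
     xi_image (fun t => Icc theta1 theta2 t \/ Icc theta5 theta6 t) X) /\
  (closed_pw_curve Cgamma3 /\ positively_oriented Cgamma3 /\ CAMC_with gamma6 Cgamma3 (-1) /\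
   forall X, curve_image Cgamma3 X <->
     xi_image (fun t => Icc theta8 theta1 t \/ Icc theta3 (rho2 + PI / 2) t \/
                        Icc (rho1 + PI) theta6 t) X) /\
  (closed_pw_curve Cgamma4 /\ positively_oriented Cgamma4 /\ CAMC_with gamma6 Cgamma4 (-1) /\
   forall X, curve_image Cgamma4 X <->
     xi_image (fun t => Icc theta1 rho1 t \/ Icc rho2 theta2 t \/
                        Icc theta3 (rho1 + PI / 2) t \/ Icc (rho2 + PI / 2) theta4 t \/
                        Icc theta5 (rho1 + PI) t \/ Icc (rho2 + PI) theta6 t \/
                        Icc theta7 (rho1 + 3 * PI / 2) t \/
                        Icc (rho2 + 3 * PI / 2) (theta8 + 2 * PI) t) X) /\
  (* (iv) Cgamma5 = xi([-rho1, rho1]) is a closed piecewise-smooth curve, not CAMC;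
          arcs of Cgamma5: xi on [theta1,rho1], [theta8,theta1], [-rho1,theta8]
          (traversed with decreasing theta, parameter t = -theta) *)
  (closed_pw_curve Cgamma5 /\ positively_oriented Cgamma5 /\ ~ CAMC gamma6 Cgamma5 /\
   (forall X, curve_image Cgamma5 X <-> xi_image (Icc (- rho1) rho1) X) /\
   (forall th, theta8 < th < theta1 ->
      aniso_curv gamma6 (fun t => xi (- t)) (- th) = -1) /\
   (forall th, (- rho1 < th < theta8 \/ theta1 < th < rho1) ->
      aniso_curv gamma6 (fun t => xi (- t)) (- th) = 1)).
Proof.
  split; [exact xi_formula|].
  split; [exact Wulff_shape_xi_image|].
  split; [destruct Cgamma1_CAMC as [H1 [H2 H3]]; exact (conj H1 (conj H2 (conj H3 Cgamma1_image)))|].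
  split; [destruct Cgamma2_CAMC as [H1 [H2 H3]]; exact (conj H1 (conj H2 (conj H3 Cgamma2_image)))|].
  split; [destruct Cgamma3_CAMC as [H1 [H2 H3]]; exact (conj H1 (conj H2 (conj H3 Cgamma3_image)))|].
  split; [destruct Cgamma4_CAMC as [H1 [H2 H3]]; exact (conj H1 (conj H2 (conj H3 Cgamma4_image)))|].
  exact (conj Cgamma5_closed (conj Cgamma5_positively_oriented (conj Cgamma5_not_CAMC
           (conj Cgamma5_image (conj Cgamma5_curv_middle Cgamma5_curv_outer))))).
Qed.
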